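(* Let $A\in\mathrm{Seq}_{r,t}$ and let $i$ be an index with $a_i\neq a_{i+1}$. Then there is a power series $W_i^{(A)}(u)\in\mathbb C[y_1,\dots,y_{i-1}][[u^{-1}]]$ such that $$e_i^{(A)}\frac{1}{u-y_i}e_i^{(A)}=\frac{W_i^{(A)}(u)}{u}e_i^{(A)}$$ in $\operatorname{End}(A)[[u^{-1}]]$. Moreover $W_i^{(A)}$ depends only on $(a_1,\dots,a_i)$: if $A,A'\in\mathrm{Seq}_{r,t}$ with $a_i\ne a_{i+1}$, $a'_i\neq a'_{i+1}$ and $a_j=a'_j$ for all $j\le i$, then $W_i^{(A)}=W_i^{(A')}$.
   Context: Let $r,t\in\mathbb N$. An $(r,t)$-sequence is a sequence $A=(a_1,\dots,a_{r+t})$ that is a permutation of $(1,\dots,1,-1,\dots,-1)$ ($r$ entries $1$, $t$ entries $-1$); $\mathrm{Seq}_{r,t}$ is the set of these, and the simple transpositions $\mathsf s_j=(j,j+1)$ of $S_{r+t}$ act on it by permuting entries. Fix complex numbers $\boldsymbol\omega=(\omega_k)_{k\in\mathbb N}$. The degenerate affine walled Brauer category $\underline{\mathrm{VB}}_{r,t}(\boldsymbol\omega)$ is the $\mathbb C$-linear category with object set $\mathrm{Seq}_{r,t}$ whose morphisms are generated by: endomorphisms $s_i^{(A)}$ of $A$ for $1\le i\le r+t-1$ with $a_i=a_{i+1}$; endomorphisms $e_i^{(A)}$ of $A$ for $1\le i\le r+t-1$ with $a_i\neq a_{i+1}$; endomorphisms $y_i^{(A)}$ of $A$ for $1\le i\le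 r+t$; and morphisms $\hat s_j^{(A)},\hat e_j^{(A)}:A\to\mathsf s_jA$ whenever $\mathsf s_jA\ne A$. Superscripts are usually omitted; composition $fg$ means $g$ first. A symbol $\dot s_i$ stands for $s_i$ or $\hat s_i$ and $\dot e_i$ for $e_i$ or $\hat e_i$; each relation is imposed for all objects and all choices of dotted symbols (possibly different on the two sides) for which both sides are defined morphisms with the same source and target. Relations: (1) $\dot s_i\dot s_i=1$; (2) $\dot s_i\dot s_j=\dot s_j\dot s_i$ for $|i-j|>1$, $\dot s_i\dot s_{i+1}\dot s_i=\dot s_{i+1}\dot s_i\dot s_{i+1}$, $\dot s_iy_j=y_j\dot s_i$ for $j\ne i,i+1$; (3) $(e_i^{(A)})^2=\omega_0e_i^{(A)}$; (4) $e_1^{(A)}y_1^ke_1^{(A)}=\omega_ke_1^{(A)}$ for all $k\in\mathbb N$ when $a_1=1,a_2=-1$; (5) $\dot s_i\dot e_j=\dot e_j\dot s_i$ and $\dot e_i\dot e_j=\dot e_j\dot e_i$ for $|i-j|>1$, $\dot e_iy_j=y_j\dot e_i$ for $j\neq i,i+1$, $y_iy_j=y_jy_i$; (6) $\hat s_i\dot e_i=\dot e_i=\dot e_i\hat s_i$, $\dot s_i\dot e_{i+1}\dot e_i=\dot s_{i+1}\dot e_i$, $\dot e_i\dot e_{i+1}\dot s_i=\dot e_i\dot s_{i+1}$, $\dot e_{i+1}\dot e_i\dot s_{i+1}=\dot e_{i+1}\dot s_i$, $\dot s_{i+1}\dot e_i\dot e_{i+1}=\dot s_i\dot e_{i+1}$,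 $\dot e_{i+1}\dot e_i\dot e_{i+1}=\dot e_{i+1}$, $\dot e_i\dot e_{i+1}\dot e_i=\dot e_i$; (7) $s_iy_i-y_{i+1}s_i=-1$, $s_iy_{i+1}-y_is_i=1$, $\hat s_iy_i-y_{i+1}\hat s_i=\hat e_i$, $\hat s_iy_{i+1}-y_i\hat s_i=-\hat e_i$; (8) $\dot e_i(y_i+y_{i+1})=0=(y_i+y_{i+1})\dot e_i$. Power series: $u$ is a formal variable; one works in $\operatorname{End}(A)[[u^{-1}]]$, with $\frac1{u-y}:=\sum_{k\ge0}y^ku^{-k-1}$. *)

(* The degenerate affine walled Brauer category VB_{r,t}(omega)
   is encoded as a presented CCC-linear category: untyped morphism terms, a
   typing function (source object -> target object), and the least
   congruence [eqv] containing the CCC-linear category axioms and the defining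
   relations (1)-(8).  [eqv r t om A f g] means: f and g are morphisms with
   source A and the same target, and f = g in VB_{r,t}(om). *)
From Stdlib Require Import Reals List ZArith Arith Bool.
Import ListNotations.

Definition CC := (R * R)%type.
Definition C0 : CC := (0%R, 0%R).
Definition C1 : CC := (1%R, 0%R).
Definition Cm1 : CC := ((-1)%R, 0%R).
Definition Cadd (x y : CC) : CC := (fst x + fst y, snd x + snd y)%R.
Definition Cmul (x y : CC) : CC :=
  (fst x * fst y - snd x * snd y, fst x * snd y + snd x * fst y)%R.

Definition in_Seq (r t : nat) (A : list Z) : Prop :=
  length A = r + t /\ Forall (fun x => x = 1%Z \/ x = (-1)%Z) A /\
  count_occ Z.eq_dec A 1%Z = r.

(* 1-based entry a_i *)
Definition ent (A : list Z) (i : nat) : Z := nth (i - 1) A 0%Z.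

(* action of the simple transposition s_i = (i, i+1) (1-based) *)
Definition sw (i : nat) (A : list Z) : list Z :=
  firstn (i - 1) A ++ [ent A (i + 1); ent A i] ++ skipn (i + 1) A.

(* morphism terms.  [Sg i] is the dotted s_i: at an object A it is s_i^(A)
   if a_i = a_{i+1} and \hat s_i^(A) otherwise (exactly one exists).
   [Eg i] = e_i, [HEg i] = \hat e_i, [Yg i] = y_i.
   [Cmp f g] is the composite fg (g first). *)
Inductive tm : Type :=
| Id : tm
| Cmp : tm -> tm -> tm
| Add : tm -> tm -> tm
| Scal : CC -> tm -> tm
| Sg : nat -> tm
| Eg : nat -> tm
| HEg : nat -> tm
| Yg : nat -> tm.

Definition validi (A : list Z) (i : nat) : bool := (1 <=? i) && (i <? length A).

(* target of a term with given source (None = ill-typed / undefined) *)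
Fixpoint tgt (A : list Z) (f : tm) : option (list Z) :=
  match f with
  | Id => Some A
  | Cmp f g => match tgt A g with Some B => tgt B f | None => None end
  | Add f g =>
      match tgt A f, tgt A g with
      | Some B, Some B' => if list_eq_dec Z.eq_dec B B' then Some B else None
      | _, _ => None
      end
  | Scal _ f => tgt A f
  | Sg i => if validi A i then Some (sw i A) else None
  | Eg i => if validi A i && negb (Z.eqb (ent A i) (ent A (i + 1))) then Some A else None
  | HEg i => if validi A i && negb (Z.eqb (ent A i) (ent A (i + 1))) then Some (sw i A) else None
  | Yg i => if (1 <=? i) && (i <=? length A) then Some A else None
  end.

Definition de (b : bool) (i : nat) : tm := if b then HEg i else Eg i.

Fixpoint pw (f : tm) (k : nat) : tm :=
  match k with O => Id | S k' => Cmp f (pw f k') end.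

Definition Sub (f g : tm) : tm := Add f (Scal Cm1 g).

Definition far (i j : nat) : Prop := i + 1 < j \/ j + 1 < i.

(* the defining relations (1)-(8), at source object A; each occurrence of a
   dotted e gets its own independent choice. Instances are only imposed when
   both sides are defined with the same source and target (see [eqv]). *)
Inductive rel (om : nat -> CC) (A : list Z) : tm -> tm -> Prop :=
| r1 i : rel om A (Cmp (Sg i) (Sg i)) Id
| r2a i j : far i j -> rel om A (Cmp (Sg i) (Sg j)) (Cmp (Sg j) (Sg i))
| r2b i : rel om A (Cmp (Sg i) (Cmp (Sg (i+1)) (Sg i)))
                   (Cmp (Sg (i+1)) (Cmp (Sg i) (Sg (i+1))))
| r2c i j : j <> i -> j <> i + 1 -> rel om A (Cmp (Sg i) (Yg j)) (Cmp (Yg j) (Sg i))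
| r3 i : rel om A (Cmp (Eg i) (Eg i)) (Scal (om 0) (Eg i))
| r4 k : ent A 1 = 1%Z -> ent A 2 = (-1)%Z ->
    rel om A (Cmp (Eg 1) (Cmp (pw (Yg 1) k) (Eg 1))) (Scal (om k) (Eg 1))
| r5a i j b b' : far i j -> rel om A (Cmp (Sg i) (de b j)) (Cmp (de b' j) (Sg i))
| r5b i j b1 b2 b3 b4 : far i j ->
    rel om A (Cmp (de b1 i) (de b2 j)) (Cmp (de b3 j) (de b4 i))
| r5c i j b b' : j <> i -> j <> i + 1 ->
    rel om A (Cmp (de b i) (Yg j)) (Cmp (Yg j) (de b' i))
| r5d i j : rel om A (Cmp (Yg i) (Yg j)) (Cmp (Yg j) (Yg i))
| r6a i b b' : rel om A (Cmp (Sg i) (de b i)) (de b' i)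
| r6b i b b' : rel om A (de b i) (Cmp (de b' i) (Sg i))
| r6c i b1 b2 b3 : rel om A (Cmp (Sg i) (Cmp (de b1 (i+1)) (de b2 i)))
                            (Cmp (Sg (i+1)) (de b3 i))
| r6d i b1 b2 b3 : rel om A (Cmp (de b1 i) (Cmp (de b2 (i+1)) (Sg i)))
                            (Cmp (de b3 i) (Sg (i+1)))
| r6e i b1 b2 b3 : rel om A (Cmp (de b1 (i+1)) (Cmp (de b2 i) (Sg (i+1))))
                            (Cmp (de b3 (i+1)) (Sg i))
| r6f i b1 b2 b3 : rel om A (Cmp (Sg (i+1)) (Cmp (de b1 i) (de b2 (i+1))))
                            (Cmp (Sg i) (de b3 (i+1)))
| r6g i b1 b2 b3 b4 : rel om A (Cmp (de b1 (i+1)) (Cmp (de b2 i) (de b3 (i+1))))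
                               (de b4 (i+1))
| r6h i b1 b2 b3 b4 : rel om A (Cmp (de b1 i) (Cmp (de b2 (i+1)) (de b3 i)))
                               (de b4 i)
| r7a i : ent A i = ent A (i+1) ->
    rel om A (Sub (Cmp (Sg i) (Yg i)) (Cmp (Yg (i+1)) (Sg i))) (Scal Cm1 Id)
| r7b i : ent A i = ent A (i+1) ->
    rel om A (Sub (Cmp (Sg i) (Yg (i+1))) (Cmp (Yg i) (Sg i))) Id
| r7c i : ent A i <> ent A (i+1) ->
    rel om A (Sub (Cmp (Sg i) (Yg i)) (Cmp (Yg (i+1)) (Sg i))) (HEg i)
| r7d i : ent A i <> ent A (i+1) ->
    rel om A (Sub (Cmp (Sg i) (Yg (i+1))) (Cmp (Yg i) (Sg i))) (Scal Cm1 (HEg i))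
| r8a i b b' : rel om A (Cmp (de b i) (Add (Yg i) (Yg (i+1)))) (Scal C0 (de b' i))
| r8b i b b' : rel om A (Cmp (Add (Yg i) (Yg (i+1))) (de b i)) (Scal C0 (de b' i)).

Inductive lin_ax : tm -> tm -> Prop :=
| la_idl f : lin_ax (Cmp Id f) f
| la_idr f : lin_ax (Cmp f Id) f
| la_assoc f g h : lin_ax (Cmp f (Cmp g h)) (Cmp (Cmp f g) h)
| la_distl f g h : lin_ax (Cmp f (Add g h)) (Add (Cmp f g) (Cmp f h))
| la_distr f g h : lin_ax (Cmp (Add f g) h) (Add (Cmp f h) (Cmp g h))
| la_scl c f g : lin_ax (Cmp f (Scal c g)) (Scal c (Cmp f g))
| la_scr c f g : lin_ax (Cmp (Scal c f) g) (Scal c (Cmp f g))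
| la_addC f g : lin_ax (Add f g) (Add g f)
| la_addA f g h : lin_ax (Add f (Add g h)) (Add (Add f g) h)
| la_add0 f g : lin_ax (Add f (Scal C0 g)) f
| la_addN f : lin_ax (Add f (Scal Cm1 f)) (Scal C0 f)
| la_sc1 f : lin_ax (Scal C1 f) f
| la_scA x y f : lin_ax (Scal x (Scal y f)) (Scal (Cmul x y) f)
| la_scDl x y f : lin_ax (Scal (Cadd x y) f) (Add (Scal x f) (Scal y f))
| la_scDr x f g : lin_ax (Scal x (Add f g)) (Add (Scal x f) (Scal x g)).

Inductive eqv (r t : nat) (om : nat -> CC) : list Z -> tm -> tm -> Prop :=
| ev_refl A f B : in_Seq r t A -> tgt A f = Some B -> eqv r t om A f f
| ev_sym A f g : eqv r t om A f g -> eqv r t om A g f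
| ev_trans A f g h : eqv r t om A f g -> eqv r t om A g h -> eqv r t om A f h
| ev_cmp A B f f' g g' : eqv r t om A g g' -> tgt A g = Some B ->
    eqv r t om B f f' -> eqv r t om A (Cmp f g) (Cmp f' g')
| ev_add A f f' g g' : eqv r t om A f f' -> eqv r t om A g g' ->
    tgt A f = tgt A g -> eqv r t om A (Add f g) (Add f' g')
| ev_scal A c f f' : eqv r t om A f f' -> eqv r t om A (Scal c f) (Scal c f')
| ev_lin A f g B : in_Seq r t A -> lin_ax f g ->
    tgt A f = Some B -> tgt A g = Some B -> eqv r t om A f g
| ev_rel A f g B : in_Seq r t A -> rel om A f g ->
    tgt A f = Some B -> tgt A g = Some B -> eqv r t om A f g.

(* polynomials in CC[y_1, y_2, ...]: list of (coefficient, exponent vector);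
   exponent vector [n_1; ...; n_m] stands for y_1^n_1 ... y_m^n_m *)
Definition cpoly := list (CC * list nat).

Fixpoint mono_aux (j : nat) (es : list nat) : tm :=
  match es with
  | [] => Id
  | n :: es' => Cmp (pw (Yg j) n) (mono_aux (j + 1) es')
  end.
Definition mono (es : list nat) : tm := mono_aux 1 es.

Definition evalp (p : cpoly) : tm :=
  fold_right (fun ce acc => Add (Scal (fst ce) (mono (snd ce))) acc) (Scal C0 Id) p.

Definition in_vars (p : cpoly) (m : nat) : Prop :=
  Forall (fun ce => length (snd ce) <= m) p.

(* For an object A with a_i <> a_{i+1} call e_i y_i^k e_i the k-th moment.  We show
   that it equals Q e_i for a polynomial Q in y_1, ..., y_{i-1} that depends only
   on the prefix P = (a_1, ..., a_i) ([moments_reduce i P]); then W(P, k) is the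
   explicit polynomial of Q, which gives the coefficient of u^{-k-1} in the identity
   e_i (u - y_i)^{-1} e_i = u^{-1} W_i(u) e_i.  The proof is by strong induction
   on i:
   - base case P = (1): relation (4) gives e_1 y_1^k e_1 = omega_k e_1;
   - flip case: moments at (P0, x) follow from those at (P0, -x) by conjugating
     with the transposition s_i (section [FlipCase]);
   - equal case: moments at (P1, x, x) follow from those at (P1, x) through the
     "twisted" moments e_i y_i^a s_{i-1} y_{i-1}^b s_{i-1} e_i (section [EqualCase]).
   Every prefix (P1, z, y) arises from (P1, z, z) by at most one flip. *)

From Stdlib Require Import List ZArith Arith Lia Bool Permutation Reals IndefiniteDescription.
(* Imported after the Stdlib so that the constructor [Add] of [tm] shadows [List.Add]. *)
Import ListNotations.

Lemma validi_iff A i : validi A i = true <-> 1 <= i < length A.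
Proof. unfold validi. rewrite andb_true_iff, Nat.leb_le, Nat.ltb_lt. lia. Qed.

Lemma split_at_position (A : list Z) i : 1 <= i < length A ->
  exists L x y R, A = L ++ x :: y :: R /\ length L = i - 1.
Proof.
  intros H. exists (firstn (i-1) A), (nth (i-1) A 0%Z), (nth i A 0%Z), (skipn (i+1) A).
  split; [| rewrite length_firstn; lia].
  rewrite <- (firstn_skipn (i-1) A) at 1. f_equal.
  revert i H. induction A as [|a A IH]; intros i H; simpl in *; [lia|].
  destruct i as [|[|i]]; [lia| |].
  - destruct A; simpl in *; [lia|reflexivity].
  - simpl. replace (i - 0) with i by lia. specialize (IH (S i)). simpl in IH.
    replace (i - 0) with i in IH by lia. apply IH. lia.
Qed.

Lemma ent_app_l (L M : list Z) l : 1 <= l <= length L -> ent (L ++ M) l = ent L l.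
Proof. intros. unfold ent. apply app_nth1. lia. Qed.

Lemma ent_app_r (L M : list Z) l : length L < l -> ent (L ++ M) l = ent M (l - length L).
Proof. intros. unfold ent. rewrite app_nth2 by lia. f_equal. lia. Qed.

Lemma ent_at_first (L : list Z) x y R : ent (L ++ x :: y :: R) (length L + 1) = x.
Proof. rewrite ent_app_r by lia. replace (length L + 1 - length L) with 1 by lia. reflexivity. Qed.

Lemma ent_at_second (L : list Z) x y R : ent (L ++ x :: y :: R) (length L + 1 + 1) = y.
Proof.
  rewrite ent_app_r by lia. replace (length L + 1 + 1 - length L) with 2 by lia. reflexivity.
Qed.

Lemma ent_at_other (L : list Z) x y R x' y' l :
  1 <= l -> l <> length L + 1 -> l <> length L + 1 + 1 ->
  ent (L ++ x :: y :: R) l = ent (L ++ x' :: y' :: R) l.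
Proof.
  intros. destruct (Nat.le_gt_cases l (length L)).
  - rewrite !ent_app_l by lia. reflexivity.
  - rewrite !ent_app_r by lia. unfold ent.
    destruct (l - length L) as [|[|[|n]]] eqn:E; try lia. reflexivity.
Qed.

Lemma sw_at_split (L : list Z) x y R : sw (length L + 1) (L ++ x :: y :: R) = L ++ y :: x :: R.
Proof.
  unfold sw. replace (length L + 1 - 1) with (length L) by lia.
  rewrite firstn_app, Nat.sub_diag, firstn_all, app_nil_r.
  rewrite !ent_app_r by lia.
  replace (length L + 1 + 1 - length L) with 2 by lia.
  replace (length L + 1 - length L) with 1 by lia. unfold ent; simpl.
  rewrite skipn_app. replace (length L + 1 + 1 - length L) with 2 by lia.
  rewrite skipn_all2 by lia. reflexivity.
Qed.

Lemma sw_split (A : list Z) i : 1 <= i < length A ->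
  exists L x y R, A = L ++ x :: y :: R /\ length L = i - 1 /\ sw i A = L ++ y :: x :: R.
Proof.
  intros H. destruct (split_at_position A i H) as (L & x & y & R & -> & HL).
  exists L, x, y, R. repeat split; [exact HL|].
  replace i with (length L + 1) by lia. apply sw_at_split.
Qed.

Section Transposition.
Variables (A : list Z) (i : nat).
Hypothesis Hi : 1 <= i < length A.

Ltac split_A := destruct (sw_split A i Hi) as (L & x & y & R & -> & HL & ->);
  replace i with (length L + 1) in * by lia.

Lemma length_sw : length (sw i A) = length A.
Proof. split_A. rewrite !length_app. reflexivity. Qed.

Lemma sw_involutive : sw i (sw i A) = A.
Proof. split_A. apply sw_at_split. Qed.

Lemma ent_sw_left : ent (sw i A) i = ent A (i+1).
Proof. split_A. rewrite ent_at_first, ent_at_second. reflexivity. Qed.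

Lemma ent_sw_right : ent (sw i A) (i+1) = ent A i.
Proof. split_A. rewrite ent_at_first, ent_at_second. reflexivity. Qed.

Lemma ent_sw_other l : 1 <= l -> l <> i -> l <> i + 1 -> ent (sw i A) l = ent A l.
Proof. intros. split_A. apply ent_at_other; lia. Qed.

Lemma sw_trivial : ent A i = ent A (i+1) -> sw i A = A.
Proof. split_A. rewrite ent_at_first, ent_at_second. intros ->. reflexivity. Qed.

Lemma firstn_sw : firstn i (sw i A) = firstn (i-1) A ++ [ent A (i+1)].
Proof.
  split_A. rewrite ent_at_second. replace (length L + 1 - 1) with (length L) by lia.
  rewrite !firstn_app, Nat.sub_diag. replace (length L + 1 - length L) with 1 by lia.
  rewrite (firstn_all2 (n := length L + 1) L), firstn_all by lia.
  simpl. rewrite app_nil_r. reflexivity.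
Qed.

Lemma in_Seq_sw r t : in_Seq r t A -> in_Seq r t (sw i A).
Proof.
  assert (P : Permutation A (sw i A)) by (split_A; apply Permutation_app_head; constructor).
  intros (H1 & H2 & H3). split; [|split].
  - rewrite <- H1. symmetry. apply Permutation_length. exact P.
  - eapply Permutation_Forall; eauto.
  - rewrite <- H3. symmetry. apply Permutation_count_occ. exact P.
Qed.
End Transposition.

Lemma ent_sign r t A l : in_Seq r t A -> 1 <= l <= length A ->
  ent A l = 1%Z \/ ent A l = (-1)%Z.
Proof.
  intros (_ & H & _) Hl. unfold ent. rewrite Forall_forall in H. apply H. apply nth_In. lia.
Qed.

Lemma ent_prefix (A P : list Z) n l : firstn n A = P -> 1 <= l <= n -> n <= length A ->
  ent A l = ent P l.
Proof.
  intros <- H1 H2. unfold ent. rewrite nth_firstn.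
  destruct (l - 1 <? n) eqn:E; auto. apply Nat.ltb_ge in E. lia.
Qed.

Lemma length_prefix (A P : list Z) n : firstn n A = P -> n <= length A -> length P = n.
Proof. intros <- H. rewrite length_firstn. lia. Qed.

Section Congruence.
Variables (r t : nat) (om : nat -> CC).
Notation E := (eqv r t om).
Notation Obj := (in_Seq r t).

Lemma tgt_in_Seq f : forall A B, Obj A -> tgt A f = Some B -> Obj B.
Proof.
  induction f; intros A B HA H; simpl in H.
  - congruence.
  - destruct (tgt A f2) eqn:E2; [eauto|discriminate].
  - destruct (tgt A f1) eqn:E1; [|discriminate]. destruct (tgt A f2); [|discriminate].
    destruct (list_eq_dec Z.eq_dec l l0); [|discriminate]. inversion H; subst. eauto.
  - eauto.
  - destruct (validi A n) eqn:V; [|discriminate]. inversion H; subst.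
    apply in_Seq_sw; auto. apply validi_iff; auto.
  - destruct (validi A n && _); [congruence|discriminate].
  - destruct (validi A n) eqn:V; simpl in H; [|discriminate].
    destruct (negb _); [|discriminate]. inversion H; subst.
    apply in_Seq_sw; auto. apply validi_iff; auto.
  - destruct (_ && _); [congruence|discriminate].
Qed.

Lemma eqv_typed A f g : E A f g -> Obj A /\ exists B, tgt A f = Some B /\ tgt A g = Some B.
Proof.
  induction 1.
  - eauto.
  - destruct IHeqv as (? & B & ? & ?). eauto.
  - destruct IHeqv1 as (? & B & ? & ?). destruct IHeqv2 as (? & B' & ? & ?).
    split; auto. exists B. split; congruence.
  - destruct IHeqv1 as (HA & B1 & Hg & Hg'). destruct IHeqv2 as (HB & C & Hf & Hf').
    split; auto. exists C. simpl. rewrite H0. split; [auto|].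
    replace (tgt A g') with (Some B) by congruence. auto.
  - destruct IHeqv1 as (HA & B & Hf & Hf'). destruct IHeqv2 as (HA2 & B' & Hg & Hg').
    split; auto. exists B. simpl. rewrite Hf, Hf', Hg, Hg'. assert (B = B') by congruence. subst.
    destruct (list_eq_dec Z.eq_dec B' B'); [auto|congruence].
  - destruct IHeqv as (? & B & ? & ?). split; auto. exists B. simpl. auto.
  - eauto.
  - eauto.
Qed.

Lemma eqv_in_Seq A f g : E A f g -> Obj A.
Proof. intros H. apply eqv_typed in H. tauto. Qed.

Lemma eqv_tgt_l A f g B : E A f g -> tgt A g = Some B -> tgt A f = Some B.
Proof. intros H H1. apply eqv_typed in H. destruct H as (_ & B' & H2 & H3). congruence. Qed.

Lemma eqv_tgt_r A f g B : E A f g -> tgt A f = Some B -> tgt A g = Some B.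
Proof. intros H H1. apply eqv_typed in H. destruct H as (_ & B' & H2 & H3). congruence. Qed.

Lemma E_refl A f B : Obj A -> tgt A f = Some B -> E A f f.
Proof. intros. eapply ev_refl; eauto. Qed.

Lemma E_cmpL A B f f' g : E B f f' -> Obj A -> tgt A g = Some B -> E A (Cmp f g) (Cmp f' g).
Proof. intros. eapply ev_cmp; eauto. eapply E_refl; eauto. Qed.

Lemma E_cmpR A B C f g g' : E A g g' -> tgt A g = Some B -> tgt B f = Some C ->
  E A (Cmp f g) (Cmp f g').
Proof.
  intros H1 H2 H3. eapply ev_cmp; eauto. eapply E_refl; eauto.
  eapply tgt_in_Seq; eauto. eapply eqv_in_Seq; eauto.
Qed.

Lemma E_lin A f g B : Obj A -> lin_ax f g -> tgt A f = Some B -> tgt A g = Some B -> E A f g.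
Proof. intros. eapply ev_lin; eauto. Qed.

Lemma E_rel A f g B : Obj A -> rel om A f g -> tgt A f = Some B -> tgt A g = Some B -> E A f g.
Proof. intros. eapply ev_rel; eauto. Qed.

Lemma E_assoc A f g h B C D : Obj A -> tgt A h = Some B -> tgt B g = Some C -> tgt C f = Some D ->
  E A (Cmp f (Cmp g h)) (Cmp (Cmp f g) h).
Proof.
  intros. eapply E_lin with (B := D); auto; [constructor| |].
  - simpl. rewrite H0, H1. auto.
  - simpl. rewrite H0. simpl. rewrite H1. auto.
Qed.

Fixpoint word (l : list tm) : tm :=
  match l with [] => Id | [x] => x | x :: l' => Cmp x (word l') end.

Lemma word_cons x l : l <> [] -> word (x :: l) = Cmp x (word l).
Proof. destruct l; [congruence|reflexivity]. Qed.

Lemma tgt_word_app l1 l2 A : tgt A (word (l1 ++ l2)) =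
  match tgt A (word l2) with Some B => tgt B (word l1) | None => None end.
Proof.
  induction l1 as [|x [|y l1'] IH].
  - simpl. destruct (tgt A (word l2)); reflexivity.
  - destruct l2 as [|z l2']; [reflexivity|].
    simpl app. rewrite word_cons by congruence. reflexivity.
  - rewrite <- app_comm_cons, !word_cons by (simpl; congruence). cbn [tgt]. rewrite IH.
    destruct (tgt A (word l2)); reflexivity.
Qed.

Lemma E_word_app l1 l2 A C : Obj A -> tgt A (word (l1 ++ l2)) = Some C ->
  E A (word (l1 ++ l2)) (Cmp (word l1) (word l2)).
Proof.
  revert A C. induction l1 as [|x [|y l1'] IH]; intros A C HA HT.
  - simpl in *. apply ev_sym. eapply E_lin; eauto; [constructor|]. simpl. rewrite HT. auto.
  - destruct l2 as [|z l2'].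
    + simpl in *. apply ev_sym. eapply E_lin; eauto. constructor.
    + simpl app. rewrite word_cons by congruence. eapply E_refl; eauto.
  - rewrite <- app_comm_cons, !word_cons by (simpl; congruence).
    rewrite <- app_comm_cons, word_cons in HT by (simpl; congruence).
    cbn [tgt] in HT. destruct (tgt A (word ((y :: l1') ++ l2))) as [B|] eqn:HB; [|discriminate].
    pose proof HB as HB'. rewrite tgt_word_app in HB'.
    destruct (tgt A (word l2)) as [X|] eqn:HX; [|discriminate].
    eapply ev_trans; [eapply E_cmpR; eauto|].
    apply E_assoc with (B := X) (C := B) (D := C); auto.
Qed.

Lemma E_word_ctx l1 m m' l2 A X C : Obj A -> tgt A (word l2) = Some X -> E X (word m) (word m') ->
  tgt A (word (l1 ++ m ++ l2)) = Some C -> E A (word (l1 ++ m ++ l2)) (word (l1 ++ m' ++ l2)).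
Proof.
  intros HA H2 Hm HT.
  pose proof HT as HT'. rewrite tgt_word_app, tgt_word_app, H2 in HT'.
  destruct (tgt X (word m)) as [Y|] eqn:HY; [|discriminate].
  assert (HY' : tgt X (word m') = Some Y) by (eapply eqv_tgt_r; eauto).
  assert (HX : Obj X) by (eapply tgt_in_Seq; eauto).
  eapply ev_trans; [eapply E_word_app; eauto|].
  eapply ev_trans. 2: apply ev_sym; eapply E_word_app; eauto.
  2: rewrite tgt_word_app, tgt_word_app, H2, HY'; exact HT'.
  eapply E_cmpR with (B := Y); [| rewrite tgt_word_app, H2; auto | exact HT'].
  eapply ev_trans. { eapply E_word_app; eauto. rewrite tgt_word_app, H2. eauto. }
  eapply ev_trans. 2: { apply ev_sym; eapply E_word_app; eauto. rewrite tgt_word_app, H2; eauto. }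
  eapply E_cmpL; eauto.
Qed.

Lemma E_rewrite_at n m m' L A X C RHS : Obj A -> E X (word m) (word m') ->
  firstn (length m) (skipn n L) = m -> tgt A (word (skipn (n + length m) L)) = Some X ->
  tgt A (word L) = Some C ->
  E A (word (firstn n L ++ m' ++ skipn (n + length m) L)) RHS -> E A (word L) RHS.
Proof.
  intros HA Hm H1 H2 HT HR.
  assert (EL : L = firstn n L ++ m ++ skipn (n + length m) L).
  { rewrite <- (firstn_skipn n L) at 1. f_equal. rewrite <- H1 at 1.
    rewrite <- (firstn_skipn (length m) (skipn n L)) at 1. f_equal.
    rewrite skipn_skipn. f_equal. lia. }
  eapply ev_trans; [|exact HR]. rewrite EL at 1. eapply E_word_ctx; eauto. rewrite <- EL; eauto.
Qed.

Lemma E_rewrite_at_rev n m m' L A X C LHS : Obj A -> E X (word m) (word m') ->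
  firstn (length m) (skipn n L) = m -> tgt A (word (skipn (n + length m) L)) = Some X ->
  tgt A (word L) = Some C ->
  E A LHS (word (firstn n L ++ m' ++ skipn (n + length m) L)) -> E A LHS (word L).
Proof. intros. apply ev_sym. eapply E_rewrite_at; eauto. apply ev_sym; auto. Qed.

Lemma E_dist_add l1 p q l2 A C : Obj A -> tgt A (word (l1 ++ [Add p q] ++ l2)) = Some C ->
  E A (word (l1 ++ [Add p q] ++ l2)) (Add (word (l1 ++ [p] ++ l2)) (word (l1 ++ [q] ++ l2))).
Proof.
  intros HA HT. pose proof HT as HT'. rewrite !tgt_word_app in HT'.
  destruct (tgt A (word l2)) as [X|] eqn:H2; [|discriminate].
  cbn [word tgt] in HT'. destruct (tgt X p) as [Y|] eqn:Hp; [|discriminate].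
  destruct (tgt X q) as [Yq|] eqn:Hq; [|discriminate].
  destruct (list_eq_dec Z.eq_dec Y Yq); [subst Yq|discriminate].
  assert (HX : Obj X) by (eapply tgt_in_Seq; eauto).
  assert (Hpq : tgt X (Add p q) = Some Y).
  { cbn [tgt]. rewrite Hp, Hq. destruct (list_eq_dec Z.eq_dec Y Y); congruence. }
  assert (Tp : tgt A (word (l1 ++ [p] ++ l2)) = Some C)
    by (rewrite !tgt_word_app, H2; cbn [word]; rewrite Hp; auto).
  assert (Tq : tgt A (word (l1 ++ [q] ++ l2)) = Some C)
    by (rewrite !tgt_word_app, H2; cbn [word]; rewrite Hq; auto).
  assert (Hsplit : forall u, tgt X u = Some Y ->
    E A (Cmp (word l1) (Cmp u (word l2))) (word (l1 ++ [u] ++ l2))).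
  { intros u Hu. assert (Tu : tgt A (word ([u] ++ l2)) = Some Y)
      by (rewrite tgt_word_app, H2; cbn [word]; rewrite Hu; auto).
    apply ev_sym. eapply ev_trans.
    - eapply E_word_app; eauto. rewrite !tgt_word_app, H2. cbn [word]. rewrite Hu. exact HT'.
    - eapply E_cmpR; [eapply E_word_app; eauto|exact Tu|exact HT']. }
  assert (Tpq : tgt A (word ([Add p q] ++ l2)) = Some Y)
    by (rewrite tgt_word_app, H2; cbn [word]; rewrite Hpq; auto).
  assert (Tpq' : tgt A (Cmp (Add p q) (word l2)) = Some Y) by (cbn [tgt]; rewrite H2; auto).
  eapply ev_trans; [eapply E_word_app; eauto|].
  eapply ev_trans; [eapply E_cmpR; [eapply E_word_app; eauto|exact Tpq|exact HT']|].
  cbn [word].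
  eapply ev_trans.
  { eapply E_cmpR; [|exact Tpq'|exact HT'].
    eapply E_lin with (B := Y); [exact HA|apply la_distr|exact Tpq'|].
    cbn [tgt]. rewrite H2, Hp, Hq. destruct (list_eq_dec Z.eq_dec Y Y); congruence. }
  eapply ev_trans.
  { eapply E_lin with (B := C); auto; [apply la_distl|..]; cbn [tgt]; rewrite H2, Hp, Hq.
    - destruct (list_eq_dec Z.eq_dec Y Y); congruence.
    - rewrite HT'. destruct (list_eq_dec Z.eq_dec C C); congruence. }
  apply ev_add; auto. cbn [tgt]. rewrite H2, Hp, Hq, HT'. auto.
Qed.

Lemma E_dist_scal l1 c p l2 A C : Obj A -> tgt A (word (l1 ++ [Scal c p] ++ l2)) = Some C ->
  E A (word (l1 ++ [Scal c p] ++ l2)) (Scal c (word (l1 ++ [p] ++ l2))).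
Proof.
  intros HA HT. pose proof HT as HT'. rewrite !tgt_word_app in HT'.
  destruct (tgt A (word l2)) as [X|] eqn:H2; [|discriminate].
  cbn [word tgt] in HT'. destruct (tgt X p) as [Y|] eqn:Hp; [|discriminate].
  assert (HX : Obj X) by (eapply tgt_in_Seq; eauto).
  assert (Tp : tgt A (word (l1 ++ [p] ++ l2)) = Some C)
    by (rewrite !tgt_word_app, H2; cbn [word]; rewrite Hp; auto).
  eapply ev_trans; [eapply E_word_app; eauto|].
  eapply ev_trans.
  { eapply E_cmpR; [eapply E_word_app; eauto| |exact HT'];
      rewrite tgt_word_app, H2; cbn [word tgt]; rewrite Hp; auto. }
  cbn [word].
  eapply ev_trans.
  { eapply E_cmpR; [eapply E_lin with (B := Y); auto; [apply la_scr|..]| |exact HT'];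
      cbn [tgt]; rewrite H2, Hp; auto. }
  eapply ev_trans.
  { eapply E_lin with (B := C); auto; [apply la_scl|..]; cbn [tgt]; rewrite H2, Hp, HT'; auto. }
  apply ev_scal. apply ev_sym. eapply ev_trans; [eapply E_word_app; eauto|].
  eapply E_cmpR; [eapply E_word_app; eauto| |exact HT'];
    rewrite tgt_word_app, H2; cbn [word]; rewrite Hp; auto.
Qed.

Lemma split_word_at (L : list tm) n x : nth n L Id = x -> n < length L ->
  L = firstn n L ++ [x] ++ skipn (n+1) L.
Proof.
  intros H1 H2. rewrite <- (firstn_skipn n L) at 1. f_equal.
  rewrite <- H1. clear H1. revert n H2. induction L; intros n H2; simpl in *; [lia|].
  destruct n; simpl; [reflexivity|]. rewrite IHL at 1 by lia. reflexivity.
Qed.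

Lemma E_expand_add n L p q A C RHS : Obj A -> nth n L Id = Add p q -> n < length L ->
  tgt A (word L) = Some C ->
  E A (Add (word (firstn n L ++ [p] ++ skipn (n+1) L))
           (word (firstn n L ++ [q] ++ skipn (n+1) L))) RHS ->
  E A (word L) RHS.
Proof.
  intros HA H1 H2 HT HR. eapply ev_trans; [|exact HR].
  rewrite (split_word_at L n _ H1 H2) at 1. apply E_dist_add with (C := C); auto.
  rewrite <- (split_word_at L n _ H1 H2). auto.
Qed.

Lemma E_expand_scal n L c p A C RHS : Obj A -> nth n L Id = Scal c p -> n < length L ->
  tgt A (word L) = Some C ->
  E A (Scal c (word (firstn n L ++ [p] ++ skipn (n+1) L))) RHS -> E A (word L) RHS.
Proof.
  intros HA H1 H2 HT HR. eapply ev_trans; [|exact HR].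
  rewrite (split_word_at L n _ H1 H2) at 1. apply E_dist_scal with (C := C); auto.
  rewrite <- (split_word_at L n _ H1 H2). auto.
Qed.
End Congruence.

(* Reified composites, so that a term can be flattened into a word by a tactic. *)
Inductive rtm := RAt (x : tm) | RCmp (a b : rtm) | RId.

Fixpoint interp (R : rtm) : tm :=
  match R with RAt x => x | RCmp a b => Cmp (interp a) (interp b) | RId => Id end.

Fixpoint rflat (R : rtm) : list tm :=
  match R with RAt x => [x] | RCmp a b => rflat a ++ rflat b | RId => [] end.

Ltac reify T := lazymatch T with
  | Cmp ?a ?b => let ra := reify a in let rb := reify b in constr:(RCmp ra rb)
  | Id => constr:(RId)
  | _ => constr:(RAt T) end.

Lemma tgt_rflat R A : tgt A (word (rflat R)) = tgt A (interp R).
Proof.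
  revert A; induction R as [x | Ra IHa Rb IHb | ]; intros A; try reflexivity.
  cbn [rflat interp]. rewrite tgt_word_app, IHb. cbn [tgt]. destruct (tgt A (interp Rb)); auto.
Qed.

Lemma E_rflat r t om R A B : in_Seq r t A -> tgt A (interp R) = Some B ->
  eqv r t om A (interp R) (word (rflat R)).
Proof.
  revert A B; induction R as [x | Ra IHa Rb IHb | ]; intros A B HA HT;
    try (eapply E_refl; eauto; fail).
  cbn [rflat interp tgt] in *. destruct (tgt A (interp Rb)) as [X|] eqn:H2; [|discriminate].
  assert (HX : in_Seq r t X) by (eapply tgt_in_Seq; eauto).
  eapply ev_trans; [eapply ev_cmp; [eapply IHb; eauto|exact H2|eapply IHa; eauto]|].
  apply ev_sym. eapply E_word_app; eauto. rewrite tgt_word_app, !tgt_rflat, H2, tgt_rflat. eauto.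
Qed.

Lemma E_by_rflat r t om A R1 R2 B : in_Seq r t A -> tgt A (interp R1) = Some B ->
  tgt A (interp R2) = Some B -> eqv r t om A (word (rflat R1)) (word (rflat R2)) ->
  eqv r t om A (interp R1) (interp R2).
Proof.
  intros. eapply ev_trans; [eapply E_rflat; eauto|].
  eapply ev_trans; [eauto|]. apply ev_sym. eapply E_rflat; eauto.
Qed.

Inductive poly_in (m : nat) : tm -> Prop :=
| poly_id : poly_in m Id
| poly_y l : 1 <= l <= m -> poly_in m (Yg l)
| poly_cmp f g : poly_in m f -> poly_in m g -> poly_in m (Cmp f g)
| poly_add f g : poly_in m f -> poly_in m g -> poly_in m (Add f g)
| poly_scal c f : poly_in m f -> poly_in m (Scal c f).

Lemma poly_in_tgt m Q X : poly_in m Q -> m <= length X -> tgt X Q = Some X.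
Proof.
  induction 1; intros HX; cbn [tgt].
  - auto.
  - replace ((1 <=? l) && (l <=? length X)) with true; auto.
    symmetry. apply andb_true_iff. rewrite !Nat.leb_le. lia.
  - rewrite IHpoly_in2, IHpoly_in1; auto.
  - rewrite IHpoly_in2, IHpoly_in1; auto. destruct (list_eq_dec Z.eq_dec X X); congruence.
  - auto.
Qed.

Lemma poly_in_mono m m' Q : poly_in m Q -> m <= m' -> poly_in m' Q.
Proof. induction 1; intros; constructor; auto; lia. Qed.

Lemma poly_in_pw m l k : 1 <= l <= m -> poly_in m (pw (Yg l) k).
Proof. intros. induction k; simpl; constructor; auto. constructor; auto. Qed.

Lemma tgt_pw f k X : tgt X f = Some X -> tgt X (pw f k) = Some X.
Proof. intros H. induction k; simpl; auto. rewrite IHk. auto. Qed.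

Lemma tgt_pw_y l k X : 1 <= l <= length X -> tgt X (pw (Yg l) k) = Some X.
Proof. intros. apply poly_in_tgt with (m := length X); auto. apply poly_in_pw. lia. Qed.

Ltac ty_step :=
  first
  [ progress cbn [tgt word de pw Sub fst snd andb negb interp rflat firstn skipn app length Nat.add]
  | progress unfold validi
  | match goal with H : ent ?X ?l = _ |- context [ent ?X ?l] => rewrite H end
  | match goal with H : sw ?a ?X = _ |- context [sw ?a ?X] => rewrite H end
  | match goal with |- context [Nat.leb ?a ?b] =>
      first [replace (Nat.leb a b) with true by (symmetry; apply Nat.leb_le; lia)
            |replace (Nat.leb a b) with false by (symmetry; apply Nat.leb_gt; lia)] end
  | match goal with |- context [Nat.ltb ?a ?b] =>
      first [replace (Nat.ltb a b) with true by (symmetry; apply Nat.ltb_lt; lia)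
            |replace (Nat.ltb a b) with false by (symmetry; apply Nat.ltb_ge; lia)] end
  | match goal with |- context [Z.eqb ?a ?b] =>
      first [replace (Z.eqb a b) with true by (symmetry; apply Z.eqb_eq; lia)
            |replace (Z.eqb a b) with false by (symmetry; apply Z.eqb_neq; lia)] end
  | match goal with |- context [list_eq_dec Z.eq_dec ?a ?a] =>
      let NE := fresh in destruct (list_eq_dec Z.eq_dec a a) as [_|NE];
      [|exfalso; apply NE; reflexivity] end
  | rewrite tgt_pw_y by lia
  | match goal with |- context [tgt ?X (pw ?f ?k)] =>
      rewrite (tgt_pw f k X) by (repeat ty_step; reflexivity) end
  | match goal with H : poly_in ?m ?Q |- context [tgt ?X ?Q] =>
      rewrite (poly_in_tgt m Q X H) by lia end
  | match goal with H : tgt ?X ?Q = _ |- context [tgt ?X ?Q] => rewrite H end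
  ].
Ltac ty := repeat ty_step; try reflexivity.

Ltac tr := eapply ev_trans.
Ltac lin c := eapply E_lin; [assumption | apply c | ty | ty].
Ltac polysolve := first [ assumption | apply poly_in_pw; lia
                        | eapply poly_in_mono; [eassumption|lia] | repeat constructor; lia ].

(* Word rewriting: [words] flattens both sides of a goal into words;
   [rw_at n m m' H] rewrites the subword m at position n of the left-hand side
   into m' using H (or its symmetric), [rw_at_rev] does the same on the
   right-hand side, [expand_add_at n] distributes a sum at position n, and
   [words_done] closes a goal whose two sides have become identical. *)
Ltac words := match goal with |- eqv ?r ?t ?om ?A ?T1 ?T2 =>
  let R1 := reify T1 in let R2 := reify T2 in change (eqv r t om A (interp R1) (interp R2));
  eapply E_by_rflat; [assumption | ty | ty | cbn [rflat app]] end.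
Ltac use_eq H := first [ exact H | eapply H; first [eassumption | polysolve]
                       | apply ev_sym; eapply H; first [eassumption | polysolve] ].
Ltac rw_at n m m' H := eapply (@E_rewrite_at _ _ _ n m m');
  [assumption | use_eq H | reflexivity | ty | ty | cbn [firstn skipn app length Nat.add]].
Ltac rw_at_rev n m m' H := eapply (@E_rewrite_at_rev _ _ _ n m m');
  [assumption | use_eq H | reflexivity | ty | ty | cbn [firstn skipn app length Nat.add]].
Ltac words_done := eapply E_refl; [assumption | ty].
Ltac expand_add_at n := eapply (@E_expand_add _ _ _ n);
  [assumption | reflexivity | cbn [length]; lia | ty | cbn [firstn skipn app Nat.add] ].
Ltac expand_scal_at n := eapply (@E_expand_scal _ _ _ n);
  [assumption | reflexivity | cbn [length]; lia | ty | cbn [firstn skipn app Nat.add] ].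

Section Linear.
Variables (r t : nat) (om : nat -> CC).
Notation E := (eqv r t om).
Variables (A B : list Z).
Hypothesis HA : in_Seq r t A.

Lemma scal0_any P R : tgt A P = Some B -> tgt A R = Some B -> E A (Scal C0 P) (Scal C0 R).
Proof.
  intros HP HR. tr; [apply ev_sym; lin (la_add0 (Scal C0 P) R)|].
  tr; [lin la_addC|]. lin la_add0.
Qed.

Lemma neg_of_sum_zero P Q R : tgt A P = Some B -> tgt A Q = Some B -> tgt A R = Some B ->
  E A (Add P Q) (Scal C0 R) -> E A Q (Scal Cm1 P).
Proof.
  intros HP HQ HR H.
  tr; [apply ev_sym; lin (la_add0 Q P)|].
  tr; [apply ev_add; [apply E_refl with (B := B); auto | apply ev_sym; lin la_addN | ty]|].
  tr; [lin la_addA|].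
  tr; [apply ev_add; [tr; [lin la_addC|exact H] | apply E_refl with (B := B); auto | ty]|].
  tr; [lin la_addC|]. lin la_add0.
Qed.

Lemma add_of_sub X Y W : tgt A X = Some B -> tgt A Y = Some B -> tgt A W = Some B ->
  E A (Add X (Scal Cm1 Y)) W -> E A X (Add Y W).
Proof.
  intros HX HY HW H. apply ev_sym.
  tr; [apply ev_add; [apply E_refl with (B := B); auto | apply ev_sym; exact H | ty]|].
  tr; [lin la_addA|].
  tr; [apply ev_add; [lin la_addC | apply E_refl with (B := B); auto | ty]|].
  tr; [apply ev_sym; lin la_addA|].
  tr; [apply ev_add; [apply E_refl with (B := B); auto | lin la_addN | ty]|].
  lin la_add0.
Qed.

Lemma add_of_sub_neg X Y W : tgt A X = Some B -> tgt A Y = Some B -> tgt A W = Some B ->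
  E A (Add X (Scal Cm1 Y)) (Scal Cm1 W) -> E A Y (Add X W).
Proof.
  intros HX HY HW H. apply add_of_sub in H; auto; try ty. apply ev_sym.
  tr; [apply ev_add; [exact H | apply E_refl with (B := B); auto | ty]|].
  tr; [apply ev_sym; lin la_addA|].
  tr; [apply ev_add; [apply E_refl with (B := B); auto | lin la_addC | ty]|].
  tr; [apply ev_add; [apply E_refl with (B := B); auto | lin la_addN | ty]|].
  lin la_add0.
Qed.
End Linear.

Section Commutation.
Variables (r t : nat) (om : nat -> CC).
Notation E := (eqv r t om).
Notation Obj := (in_Seq r t).

Lemma comm_poly X X' G m Q : Obj X -> tgt X G = Some X' -> m <= length X -> m <= length X' ->
  (forall l, 1 <= l <= m -> E X (Cmp G (Yg l)) (Cmp (Yg l) G)) -> poly_in m Q ->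
  E X (Cmp G Q) (Cmp Q G).
Proof.
  intros HX HG L1 L2 Hb HQ. induction HQ.
  - tr; [lin la_idr|]. apply ev_sym. lin la_idl.
  - auto.
  - assert (Obj X') by (eapply tgt_in_Seq; eauto).
    tr; [lin la_assoc|]. tr; [eapply E_cmpL with (B := X); eauto; ty|].
    tr; [apply ev_sym; lin la_assoc|]. tr; [eapply E_cmpR with (B := X'); eauto; ty|].
    lin la_assoc.
  - tr; [lin la_distl|]. tr; [apply ev_add; eauto; ty|]. apply ev_sym. lin la_distr.
  - tr; [lin la_scl|]. tr; [apply ev_scal; eauto|]. apply ev_sym. lin la_scr.
Qed.

Lemma comm_y_poly X a m Q : Obj X -> 1 <= a <= length X -> m <= length X -> poly_in m Q ->
  E X (Cmp (Yg a) Q) (Cmp Q (Yg a)).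
Proof.
  intros. eapply comm_poly; eauto; [ty|]. intros.
  eapply E_rel; [auto | apply r5d | ty | ty].
Qed.

Lemma comm_poly_poly X m m' Q Q' : Obj X -> m <= length X -> m' <= length X ->
  poly_in m Q -> poly_in m' Q' -> E X (Cmp Q Q') (Cmp Q' Q).
Proof.
  intros HX L1 L2 HQ HQ'. eapply comm_poly; eauto; [apply poly_in_tgt with (m := m); auto|].
  intros. apply ev_sym. apply comm_y_poly with (m := m); auto. lia.
Qed.

Lemma comm_y_pw X a c n : Obj X -> 1 <= a <= length X -> 1 <= c <= length X ->
  E X (Cmp (Yg a) (pw (Yg c) n)) (Cmp (pw (Yg c) n) (Yg a)).
Proof. intros. apply comm_y_poly with (m := length X); auto. apply poly_in_pw. lia. Qed.

Lemma comm_pw_pw X a c n n' : Obj X -> 1 <= a <= length X -> 1 <= c <= length X ->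
  E X (Cmp (pw (Yg a) n) (pw (Yg c) n')) (Cmp (pw (Yg c) n') (pw (Yg a) n)).
Proof.
  intros. apply comm_poly_poly with (m := length X) (m' := length X); auto;
    apply poly_in_pw; lia.
Qed.

Lemma s_involutive X i : Obj X -> 1 <= i < length X -> E X (Cmp (Sg i) (Sg i)) Id.
Proof.
  intros HX Hi. eapply E_rel; [exact HX | apply r1 | | reflexivity].
  cbn [tgt]. replace (validi X i) with true by (symmetry; apply validi_iff; lia).
  replace (validi (sw i X) i) with true
    by (symmetry; apply validi_iff; rewrite length_sw; lia).
  rewrite sw_involutive by lia. reflexivity.
Qed.
End Commutation.

(* The statement proved by induction.  [Cls i P] is the class of objects A with
   prefix (a_1, ..., a_i) = P on which e_i is defined; [reduces Cls m e T] says
   that T = Q e on every object of the class, for a single Q in C[y_1..y_m];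
   [moments_reduce i P] says that every moment e_i y_i^k e_i reduces in this sense. *)
Definition Cls (r t i : nat) (P : list Z) (A : list Z) : Prop :=
  in_Seq r t A /\ firstn i A = P /\ 1 <= i <= r + t - 1 /\ ent A i <> ent A (i+1).

Definition moment (i k : nat) : tm := Cmp (Eg i) (Cmp (pw (Yg i) k) (Eg i)).

Definition reduces (r t : nat) (om : nat -> CC) (C : list Z -> Prop) (m : nat) (e T : tm)
  : Prop :=
  exists Q, poly_in m Q /\ forall A, C A -> eqv r t om A T (Cmp Q e).

Definition moments_reduce (r t : nat) (om : nat -> CC) (i : nat) (P : list Z) : Prop :=
  forall k, reduces r t om (Cls r t i P) (i - 1) (Eg i) (moment i k).

Lemma Cls_typed r t i P A : Cls r t i P A ->
  in_Seq r t A /\ i < length A /\ tgt A (Eg i) = Some A.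
Proof.
  intros (HA & _ & Hi & Hne). assert (length A = r + t) by apply HA.
  split; [exact HA|]. split; [lia|]. ty.
Qed.

Section Reduces.
Variables (r t : nat) (om : nat -> CC).
Notation E := (eqv r t om).
Variables (C : list Z -> Prop) (m : nat) (e : tm).
Hypothesis HC : forall A, C A -> in_Seq r t A /\ m <= length A /\ tgt A e = Some A.
Notation red := (reduces r t om C m e).

Lemma reduces_eqv T T' : (forall A, C A -> E A T T') -> red T' -> red T.
Proof. intros H (Q & HQ & H'). exists Q. split; auto. intros A HA. tr; eauto. Qed.

Lemma reduces_e : red e.
Proof.
  exists Id. split; [constructor|]. intros A HA. destruct (HC A HA) as (HS & HL & He).
  apply ev_sym. lin la_idl.
Qed.

Lemma reduces_add T1 T2 : red T1 -> red T2 -> red (Add T1 T2).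
Proof.
  intros (Q1 & H1 & E1) (Q2 & H2 & E2). exists (Add Q1 Q2). split; [constructor; auto|].
  intros A HA. destruct (HC A HA) as (HS & HL & He). specialize (E1 A HA). specialize (E2 A HA).
  assert (tgt A T1 = Some A) by (eapply eqv_tgt_l; eauto; ty).
  assert (tgt A T2 = Some A) by (eapply eqv_tgt_l; eauto; ty).
  tr; [apply ev_add; eauto; congruence|]. apply ev_sym. lin la_distr.
Qed.

Lemma reduces_lmul R T : poly_in m R -> red T -> red (Cmp R T).
Proof.
  intros HR (Q & HQ & E1). exists (Cmp R Q). split; [constructor; auto|].
  intros A HA. destruct (HC A HA) as (HS & HL & He). specialize (E1 A HA).
  assert (tgt A T = Some A) by (eapply eqv_tgt_l; eauto; ty).
  tr; [eapply E_cmpR; eauto; ty|]. lin la_assoc.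
Qed.

Lemma reduces_scal c T : red T -> red (Scal c T).
Proof.
  intros (Q & HQ & E1). exists (Scal c Q). split; [constructor; auto|].
  intros A HA. destruct (HC A HA) as (HS & HL & He). specialize (E1 A HA).
  tr; [apply ev_scal; eauto|]. apply ev_sym. lin la_scr.
Qed.
End Reduces.

Lemma Cls_reduces_hyp r t i P m : m <= i -> forall A, Cls r t i P A ->
  in_Seq r t A /\ m <= length A /\ tgt A (Eg i) = Some A.
Proof.
  intros Hm A HA. destruct (Cls_typed r t i P A HA) as (? & ? & ?).
  split; [|split]; auto; lia.
Qed.

(* Put i = j + 1, so a_j = a_i = x <> a_{i+1}, and
   let B = s_i A, which has prefix (P1, x) and b_j <> b_{j+1}.  With
     twisted a b   = e_i y_i^a s_j y_j^b s_j e_i,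
     half_twisted a = e_i y_i^a s_j e_i,
   relations (6) give twisted 0 b = \hat e_i (e_j y_j^b e_j on B) \hat e_i and
   half_twisted 0 = e_i, while y_i s_j = s_j y_j + 1 (relation (7)) gives
     half_twisted (a+1) = half_twisted a . y_j + moment a,
     twisted (a+1) b    = twisted a (b+1) + y_j^b . half_twisted a,
     moment a           = twisted a 0.
   A strong induction on a then reduces all moments at prefix (P1, x, x) to
   those at prefix (P1, x). *)
Section EqualCase.
Variables (r t : nat) (om : nat -> CC).
Notation E := (eqv r t om).
Notation Obj := (in_Seq r t).
Variables (j : nat) (P1 : list Z) (x : Z).
Hypothesis Hj : 1 <= j.
Hypothesis Hx : (x = 1 \/ x = -1)%Z.
Notation ClsE := (Cls r t (j+1) (P1 ++ [x; x])).

Lemma equal_case_facts A : ClsE A ->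
  j + 1 < length A /\ ent A j = x /\ ent A (j+1) = x /\ ent A (j+1+1) = (-x)%Z /\
  sw j A = A /\ Obj (sw (j+1) A) /\ length (sw (j+1) A) = length A /\
  ent (sw (j+1) A) j = x /\ ent (sw (j+1) A) (j+1) = (-x)%Z /\
  ent (sw (j+1) A) (j+1+1) = x /\ sw (j+1) (sw (j+1) A) = A /\
  firstn j (sw (j+1) A) = P1 ++ [x].
Proof.
  intros (HS & HF & Hi & Hne).
  assert (HL : length A = r + t) by apply HS.
  assert (LP : length P1 = j - 1).
  { apply length_prefix in HF; [|lia]. rewrite length_app in HF. simpl in HF. lia. }
  assert (E1 : ent A j = x).
  { rewrite (ent_prefix A _ (j+1) j HF) by lia.
    replace (ent (P1 ++ [x; x]) j) with (ent (P1 ++ [x; x]) (length P1 + 1)) by (f_equal; lia).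
    apply ent_at_first. }
  assert (E2 : ent A (j+1) = x).
  { rewrite (ent_prefix A _ (j+1) (j+1) HF) by lia.
    replace (ent (P1 ++ [x; x]) (j+1)) with (ent (P1 ++ [x; x]) (length P1 + 1 + 1))
      by (f_equal; lia).
    apply ent_at_second. }
  assert (E3 : ent A (j+1+1) = (-x)%Z).
  { rewrite E2 in Hne. destruct (ent_sign r t A (j+1+1) HS); lia. }
  assert (V : 1 <= j + 1 < length A) by lia.
  repeat match goal with |- _ /\ _ => split end; auto; try lia.
  - apply sw_trivial; [lia|congruence].
  - apply in_Seq_sw; auto.
  - apply length_sw; auto.
  - rewrite ent_sw_other; auto; lia.
  - rewrite ent_sw_left; auto.
  - rewrite ent_sw_right; auto.
  - apply sw_involutive; auto.
  - replace j with (Nat.min j (j+1)) at 1 by lia. rewrite <- firstn_firstn, firstn_sw by auto.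
    replace (j+1-1) with j by lia. rewrite firstn_app, length_firstn.
    replace (j - Nat.min j (length A)) with 0 by lia. simpl. rewrite app_nil_r.
    rewrite firstn_firstn, Nat.min_id.
    replace (firstn j A) with (firstn j (firstn (j+1) A)) by (rewrite firstn_firstn; f_equal; lia).
    rewrite HF, firstn_app, LP. replace (j - (j-1)) with 1 by lia.
    rewrite firstn_all2 by lia. reflexivity.
Qed.

Section Local.
Variables (A B : list Z).
Hypotheses (HA : Obj A) (HB : Obj B) (Hlt : j + 1 < length A) (LB : length B = length A)
  (EA1 : ent A j = x) (EA2 : ent A (j+1) = x) (EA3 : ent A (j+1+1) = (-x)%Z)
  (SWj : sw j A = A) (SWA : sw (j+1) A = B) (SWB : sw (j+1) B = A)
  (EB1 : ent B j = x) (EB2 : ent B (j+1) = (-x)%Z) (EB3 : ent B (j+1+1) = x).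

Lemma y_s_same : E A (Cmp (Yg (j+1)) (Sg j)) (Add (Cmp (Sg j) (Yg j)) Id).
Proof.
  apply add_of_sub_neg with (B := A); auto; try ty.
  eapply E_rel; [auto | apply (r7a om A j); congruence | ty | ty].
Qed.

Lemma e_s_braid : E A (Cmp (Eg (j+1)) (Sg j)) (Cmp (HEg (j+1)) (Cmp (Eg j) (Sg (j+1)))).
Proof. apply ev_sym. eapply E_rel; [auto | apply (r6e om A j true false false) | ty | ty]. Qed.

Lemma s_e_braid : E A (Cmp (Sg j) (Eg (j+1))) (Cmp (Sg (j+1)) (Cmp (Eg j) (HEg (j+1)))).
Proof. apply ev_sym. eapply E_rel; [auto | apply (r6f om A j false true false) | ty | ty]. Qed.

Lemma ehat_e_ehat : E A (Cmp (HEg (j+1)) (Cmp (Eg j) (HEg (j+1)))) (Eg (j+1)).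
Proof. eapply E_rel; [auto | apply (r6g om A j true false true false) | ty | ty]. Qed.

Lemma s_e_hat : E A (Cmp (Sg (j+1)) (Eg (j+1))) (HEg (j+1)).
Proof. eapply E_rel; [auto | apply (r6a om A (j+1) false true) | ty | ty]. Qed.

Lemma s_comm_poly Q : poly_in j Q -> E A (Cmp (Sg (j+1)) Q) (Cmp Q (Sg (j+1))).
Proof.
  intros. eapply comm_poly with (m := j); eauto; try ty; try lia.
  intros. eapply E_rel; [auto | apply r2c; lia | ty | ty].
Qed.

Lemma ehat_comm_poly Q : poly_in j Q -> E B (Cmp (HEg (j+1)) Q) (Cmp Q (HEg (j+1))).
Proof.
  intros. eapply comm_poly with (m := j); eauto; try ty; try lia.
  intros. eapply E_rel; [auto | apply (r5c om B (j+1) l true true); lia | ty | ty].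
Qed.

Lemma e_comm_poly Q : poly_in j Q -> E A (Cmp (Eg (j+1)) Q) (Cmp Q (Eg (j+1))).
Proof.
  intros. eapply comm_poly with (m := j); eauto; try ty; try lia.
  intros. eapply E_rel; [auto | apply (r5c om A (j+1) l false false); lia | ty | ty].
Qed.
End Local.

Notation red := (reduces r t om ClsE j (Eg (j+1))).

Lemma ClsE_hyp : forall A, ClsE A -> Obj A /\ j <= length A /\ tgt A (Eg (j+1)) = Some A.
Proof. apply Cls_reduces_hyp. lia. Qed.

Ltac facts A H :=
  let Hlt := fresh "Hlt" in let EA1 := fresh "EA1" in let EA2 := fresh "EA2" in
  let EA3 := fresh "EA3" in let SWj := fresh "SWj" in let HB := fresh "HB" in
  let LB := fresh "LB" in let EB1 := fresh "EB1" in let EB2 := fresh "EB2" in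
  let EB3 := fresh "EB3" in let SWB := fresh "SWB" in let FB := fresh "FB" in
  let B := fresh "B" in let SWA := fresh "SWA" in let HA := fresh "HA" in
  destruct (equal_case_facts A H) as (Hlt&EA1&EA2&EA3&SWj&HB&LB&EB1&EB2&EB3&SWB&FB);
  set (B := sw (j+1) A) in *; assert (SWA : sw (j+1) A = B) by reflexivity; clearbody B;
  destruct H as (HA & _ & ? & _).

Definition twisted (a b : nat) : tm := Cmp (Eg (j+1)) (Cmp (pw (Yg (j+1)) a)
  (Cmp (Sg j) (Cmp (pw (Yg j) b) (Cmp (Sg j) (Eg (j+1)))))).
Definition half_twisted (a : nat) : tm :=
  Cmp (Eg (j+1)) (Cmp (pw (Yg (j+1)) a) (Cmp (Sg j) (Eg (j+1)))).

Hypothesis IH : moments_reduce r t om j (P1 ++ [x]).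

Lemma twisted_base b : red (twisted 0 b).
Proof.
  destruct (IH b) as (Q & HQ & HQE). exists Q. split; [polysolve|].
  intros A HC. facts A HC. assert (HQ' : poly_in j Q) by polysolve.
  assert (HssB : E B (Cmp (Sg (j+1)) (Sg (j+1))) Id) by (apply s_involutive; auto; lia).
  assert (HI : E B (moment j b) (Cmp Q (Eg j))).
  { apply HQE. split; [auto|split; [auto|split; [lia|rewrite EB1, EB2; lia]]]. }
  unfold twisted, moment in *; cbn [pw]. words.
  rw_at 0 [Eg (j+1); Sg j] [HEg (j+1); Eg j; Sg (j+1)] (e_s_braid A B).
  rw_at 4 [Sg j; Eg (j+1)] [Sg (j+1); Eg j; HEg (j+1)] (s_e_braid A B).
  rw_at 2 [Sg (j+1); pw (Yg j) b] [pw (Yg j) b; Sg (j+1)] (s_comm_poly A B).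
  rw_at 3 [Sg (j+1); Sg (j+1)] (@nil tm) HssB.
  rw_at 1 [Eg j; pw (Yg j) b; Eg j] [Q; Eg j] HI.
  rw_at 0 [HEg (j+1); Q] [Q; HEg (j+1)] (ehat_comm_poly A B).
  rw_at 1 [HEg (j+1); Eg j; HEg (j+1)] [Eg (j+1)] (ehat_e_ehat A B).
  words_done.
Qed.

Lemma reduces_rmul T R : poly_in j R -> red T -> red (Cmp T R).
Proof.
  intros HR (Q & HQ & HE). exists (Cmp Q R). split; [constructor; auto|].
  intros A HC. specialize (HE A HC). facts A HC.
  assert (tgt A T = Some A) by (eapply eqv_tgt_l; eauto; ty).
  tr; [eapply E_cmpL; eauto; ty|].
  words. rw_at 1 [Eg (j+1); R] [R; Eg (j+1)] (e_comm_poly A B). words_done.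
Qed.

Lemma half_twisted_base : red (half_twisted 0).
Proof.
  apply reduces_eqv with (T' := Eg (j+1)); [|apply reduces_e; exact ClsE_hyp].
  intros A HC. facts A HC. unfold half_twisted. cbn [pw]. words.
  rw_at 0 [Eg (j+1); Sg j] [HEg (j+1); Eg j; Sg (j+1)] (e_s_braid A B).
  rw_at 2 [Sg (j+1); Eg (j+1)] [HEg (j+1)] (s_e_hat A B).
  rw_at 0 [HEg (j+1); Eg j; HEg (j+1)] [Eg (j+1)] (ehat_e_ehat A B).
  words_done.
Qed.

Lemma half_twisted_step a :
  red (half_twisted a) -> red (moment (j+1) a) -> red (half_twisted (S a)).
Proof.
  intros H1 H2.
  apply reduces_eqv with (T' := Add (Cmp (half_twisted a) (Yg j)) (moment (j+1) a)).
  2: apply reduces_add; [exact ClsE_hyp | apply reduces_rmul; [polysolve|exact H1] | exact H2].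
  intros A HC. facts A HC. unfold half_twisted, moment. cbn [pw]. words.
  rw_at 1 [Yg (j+1); pw (Yg (j+1)) a] [pw (Yg (j+1)) a; Yg (j+1)] (comm_y_pw r t om A).
  rw_at 2 [Yg (j+1); Sg j] [Add (Cmp (Sg j) (Yg j)) Id] (y_s_same A B).
  expand_add_at 2. cbn [word]. apply ev_add; [| |ty].
  - words. rw_at_rev 3 [Eg (j+1); Yg j] [Yg j; Eg (j+1)] (e_comm_poly A B). words_done.
  - words. words_done.
Qed.

Lemma twisted_step a b :
  red (twisted a (S b)) -> red (half_twisted a) -> red (twisted (S a) b).
Proof.
  intros H1 H2.
  apply reduces_eqv with (T' := Add (twisted a (S b)) (Cmp (pw (Yg j) b) (half_twisted a))).
  2: apply reduces_add; [exact ClsE_hyp | exact H1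
                        | apply reduces_lmul; [exact ClsE_hyp | polysolve | exact H2]].
  intros A HC. facts A HC. unfold half_twisted, twisted. cbn [pw]. words.
  rw_at 1 [Yg (j+1); pw (Yg (j+1)) a] [pw (Yg (j+1)) a; Yg (j+1)] (comm_y_pw r t om A).
  rw_at 2 [Yg (j+1); Sg j] [Add (Cmp (Sg j) (Yg j)) Id] (y_s_same A B).
  expand_add_at 2. cbn [word]. apply ev_add; [| |ty].
  - words. words_done.
  - words. rw_at_rev 0 [pw (Yg j) b; Eg (j+1)] [Eg (j+1); pw (Yg j) b] (e_comm_poly A B).
    rw_at_rev 1 [pw (Yg j) b; pw (Yg (j+1)) a] [pw (Yg (j+1)) a; pw (Yg j) b]
      (comm_pw_pw r t om A).
    words_done.
Qed.

Lemma moment_twisted k : red (twisted k 0) -> red (moment (j+1) k).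
Proof.
  apply reduces_eqv. intros A HC. facts A HC.
  assert (HssA : E A (Cmp (Sg j) (Sg j)) Id) by (apply s_involutive; auto; lia).
  unfold moment, twisted. cbn [pw]. words.
  rw_at_rev 2 [Sg j; Sg j] (@nil tm) HssA. words_done.
Qed.

Lemma half_twisted_reduces a : (forall c, c < a -> red (moment (j+1) c)) -> red (half_twisted a).
Proof.
  induction a; intros H; [apply half_twisted_base|].
  apply half_twisted_step; [apply IHa; intros; apply H|apply H]; lia.
Qed.

Lemma twisted_reduces k : (forall c, c < k -> red (moment (j+1) c)) ->
  forall a b, a <= k -> red (twisted a b).
Proof.
  intros H a. induction a; intros b Ha; [apply twisted_base|].
  apply twisted_step; [apply IHa; lia|]. apply half_twisted_reduces. intros; apply H; lia.
Qed.

Lemma reduce_equal_case : moments_reduce r t om (j+1) (P1 ++ [x; x]).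
Proof.
  intros k. replace (j + 1 - 1) with j by lia.
  induction k as [k IHk] using lt_wf_ind.
  apply moment_twisted. apply twisted_reduces with (k := k); auto.
Qed.
End EqualCase.

(* For A in the class, the object
   A2 = s_i A has prefix (P0, -x), and on A2 we have
     s_i y_i s_i = y_{i+1} + e_i  (relations (1), (6), (7))   and
     e_i y_{i+1} = - e_i y_i      (relation (8)).
   Hence the mixed moments e_i y_i^n (y_{i+1} + e_i)^k e_i reduce at (P0, -x) by
   induction on k, and conjugating by s_i (e_i = s_i e_i s_i) turns the moment
   e_i y_i^k e_i on A into the mixed moment with n = 0 on A2. *)
Section FlipCase.
Variables (r t : nat) (om : nat -> CC).
Notation E := (eqv r t om).
Notation Obj := (in_Seq r t).
Variables (i : nat) (P0 : list Z) (x : Z).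
Hypothesis Hi : 1 <= i.
Hypothesis Hx : (x = 1 \/ x = -1)%Z.

Lemma flip_case_facts y A : (y = 1 \/ y = -1)%Z -> Cls r t i (P0 ++ [y]) A ->
  i < length A /\ ent A i = y /\ ent A (i+1) = (-y)%Z /\
  Obj (sw i A) /\ length (sw i A) = length A /\ ent (sw i A) i = (-y)%Z /\
  ent (sw i A) (i+1) = y /\ sw i (sw i A) = A /\ firstn i (sw i A) = P0 ++ [-y]%Z.
Proof.
  intros Hy (HS & HF & Hi' & Hne).
  assert (HL : length A = r + t) by apply HS.
  assert (LP : length P0 = i - 1).
  { apply length_prefix in HF; [|lia]. rewrite length_app in HF. simpl in HF. lia. }
  assert (E1 : ent A i = y).
  { rewrite (ent_prefix A _ i i HF) by lia. rewrite ent_app_r by lia.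
    replace (i - length P0) with 1 by lia. reflexivity. }
  assert (E2 : ent A (i+1) = (-y)%Z).
  { rewrite E1 in Hne. destruct (ent_sign r t A (i+1) HS); lia. }
  assert (V : 1 <= i < length A) by lia.
  repeat match goal with |- _ /\ _ => split end; auto; try lia.
  - apply in_Seq_sw; auto.
  - apply length_sw; auto.
  - rewrite ent_sw_left; auto.
  - rewrite ent_sw_right; auto.
  - apply sw_involutive; auto.
  - rewrite firstn_sw, E2 by auto. f_equal.
    replace (firstn (i-1) A) with (firstn (i-1) (firstn i A))
      by (rewrite firstn_firstn; f_equal; lia).
    rewrite HF, firstn_app, LP, Nat.sub_diag. simpl. rewrite app_nil_r. apply firstn_all2. lia.
Qed.

Definition yshift : tm := Add (Yg (i+1)) (Eg i).
Definition mixed (n k : nat) : tm :=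
  Cmp (Eg i) (Cmp (pw (Yg i) n) (Cmp (pw yshift k) (Eg i))).

Notation red := (reduces r t om (Cls r t i (P0 ++ [(-x)%Z])) (i-1) (Eg i)).

Lemma flipped_hyp : forall A, Cls r t i (P0 ++ [(-x)%Z]) A ->
  Obj A /\ i - 1 <= length A /\ tgt A (Eg i) = Some A.
Proof. apply Cls_reduces_hyp. lia. Qed.

Hypothesis IH : moments_reduce r t om i (P0 ++ [(-x)%Z]).

Lemma e_ynext_neg A2 : Obj A2 -> i < length A2 -> ent A2 i = (-x)%Z -> ent A2 (i+1) = x ->
  E A2 (Cmp (Eg i) (Yg (i+1))) (Scal Cm1 (Cmp (Eg i) (Yg i))).
Proof.
  intros HA2 Hlt EA1 EA2. apply neg_of_sum_zero with (B := A2) (R := Eg i); auto; try ty.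
  tr; [apply ev_sym; lin la_distl|].
  eapply E_rel; [auto | apply (r8a om A2 i false false) | ty | ty].
Qed.

Lemma mixed_reduces k : forall n, red (mixed n k).
Proof.
  assert (Hmx : (-x = 1 \/ -x = -1)%Z) by lia.
  induction k; intros n.
  - apply reduces_eqv with (T' := moment i n); [|apply IH].
    intros A HC. destruct (flip_case_facts _ A Hmx HC) as (Hlt & E1 & E2 & _).
    destruct HC as (HA & _). unfold mixed, moment, yshift. cbn [pw]. words. words_done.
  - destruct (IH n) as (Q1 & HQ1 & HE1).
    apply reduces_eqv with (T' := Add (Scal Cm1 (mixed (S n) k)) (Cmp Q1 (mixed 0 k))).
    2: apply reduces_add; [exact flipped_hyp | apply reduces_scal; [exact flipped_hyp | apply IHk]
                          | apply reduces_lmul; [exact flipped_hyp | auto | apply IHk]].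
    intros A HC. specialize (HE1 A HC).
    destruct (flip_case_facts _ A Hmx HC) as (Hlt & E1 & E2 & _). destruct HC as (HA & _).
    assert (HQ1' : poly_in (length A) Q1) by polysolve.
    unfold mixed, moment, yshift in *. cbn [pw] in *. words.
    expand_add_at 2. cbn [word]. apply ev_add; [| |ty].
    + words. rw_at 1 [pw (Yg i) n; Yg (i+1)] [Yg (i+1); pw (Yg i) n] (comm_y_pw r t om A).
      rw_at 0 [Eg i; Yg (i+1)] [Scal Cm1 (Cmp (Eg i) (Yg i))] (e_ynext_neg A).
      expand_scal_at 0. cbn [word]. apply ev_scal. words. words_done.
    + words. rw_at 0 [Eg i; pw (Yg i) n; Eg i] [Q1; Eg i] HE1. words_done.
Qed.

Section Local.
Variables (A A2 : list Z).
Hypotheses (HA : Obj A) (HA2 : Obj A2) (Hlt : i < length A) (LA2 : length A2 = length A)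
  (EA1 : ent A i = x) (EA2 : ent A (i+1) = (-x)%Z) (EB1 : ent A2 i = (-x)%Z)
  (EB2 : ent A2 (i+1) = x) (SWA : sw i A = A2) (SWB : sw i A2 = A).

Lemma e_conj_s : E A (Eg i) (Cmp (Sg i) (Cmp (Eg i) (Sg i))).
Proof.
  tr; [eapply E_rel; [auto | apply (r6b om A i false true) | ty | ty]|].
  tr; [eapply E_cmpL with (B := A2); [| auto | ty]|].
  { apply ev_sym. eapply E_rel; [auto | apply (r6a om A2 i false true) | ty | ty]. }
  apply ev_sym. lin la_assoc.
Qed.

Lemma s_y_s : E A2 (Cmp (Sg i) (Cmp (Yg i) (Sg i))) yshift.
Proof.
  assert (H7 : E A (Cmp (Sg i) (Yg i)) (Add (Cmp (Yg (i+1)) (Sg i)) (HEg i))).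
  { apply add_of_sub with (B := A2); auto; try ty.
    eapply E_rel; [auto | apply (r7c om A i); lia | ty | ty]. }
  assert (H1 : E A2 (Cmp (Sg i) (Sg i)) Id) by (apply s_involutive; auto; lia).
  assert (H6 : E A2 (Eg i) (Cmp (HEg i) (Sg i)))
    by (eapply E_rel; [auto | apply (r6b om A2 i false true) | ty | ty]).
  unfold yshift. words. rw_at 0 [Sg i; Yg i] [Add (Cmp (Yg (i+1)) (Sg i)) (HEg i)] H7.
  expand_add_at 0. cbn [word]. apply ev_add; [| |ty].
  - words. rw_at 1 [Sg i; Sg i] (@nil tm) H1. words_done.
  - words. rw_at_rev 0 [Eg i] [HEg i; Sg i] H6. words_done.
Qed.

Lemma s_ypow_s k : E A2 (Cmp (Sg i) (Cmp (pw (Yg i) k) (Sg i))) (pw yshift k).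
Proof.
  assert (H1 : E A2 (Cmp (Sg i) (Sg i)) Id) by (apply s_involutive; auto; lia).
  assert (H1' : E A (Cmp (Sg i) (Sg i)) Id) by (apply s_involutive; auto; lia).
  induction k; cbn [pw].
  - words. rw_at 0 [Sg i; Sg i] (@nil tm) H1. words_done.
  - unfold yshift in *. words.
    rw_at 2 (@nil tm) [Sg i; Sg i] H1'.
    rw_at 3 [Sg i; pw (Yg i) k; Sg i] [pw (Add (Yg (i + 1)) (Eg i)) k] IHk.
    rw_at 0 [Sg i; Yg i; Sg i] [Add (Yg (i + 1)) (Eg i)] s_y_s.
    words_done.
Qed.
End Local.

Lemma reduce_flip_case : moments_reduce r t om i (P0 ++ [x]).
Proof.
  intros k. destruct (mixed_reduces k 0) as (Q & HQ & HE). exists Q. split; auto.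
  intros A HC. destruct (flip_case_facts x A Hx HC) as (Hlt&EA1&EA2&HSB&LB&EB1&EB2&SWB&FB).
  set (A2 := sw i A) in *. assert (SWA : sw i A = A2) by reflexivity. clearbody A2.
  assert (HC2 : Cls r t i (P0 ++ [(-x)%Z]) A2).
  { destruct HC as (HA & _ & Hi' & _). split; [auto|split; [auto|split; [lia|]]].
    rewrite EB1, EB2. lia. }
  specialize (HE A2 HC2). destruct HC as (HA & _).
  assert (HQ' : E A2 (Cmp (Eg i) (Cmp (pw yshift k) (Eg i))) (Cmp Q (Eg i))).
  { tr; [|exact HE]. unfold mixed, yshift. cbn [pw]. words. words_done. }
  assert (Hc : E A2 (Cmp (Sg i) Q) (Cmp Q (Sg i))).
  { eapply comm_poly with (m := i - 1); eauto; try ty; try lia.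
    intros. eapply E_rel; [auto | apply r2c; lia | ty | ty]. }
  unfold moment. words.
  rw_at 0 [Eg i] [Sg i; Eg i; Sg i] (e_conj_s A A2).
  rw_at 4 [Eg i] [Sg i; Eg i; Sg i] (e_conj_s A A2).
  rw_at 2 [Sg i; pw (Yg i) k; Sg i] [pw yshift k] (s_ypow_s A A2).
  unfold yshift in *.
  rw_at 1 [Eg i; pw (Add (Yg (i + 1)) (Eg i)) k; Eg i] [Q; Eg i] HQ'.
  rw_at 0 [Sg i; Q] [Q; Sg i] Hc.
  rw_at_rev 1 [Eg i] [Sg i; Eg i; Sg i] (e_conj_s A A2).
  words_done.
Qed.
End FlipCase.

Section Induction.
Variables (r t : nat) (om : nat -> CC).
Notation MR := (moments_reduce r t om).

Lemma reduce_vacuous i P : (forall A, Cls r t i P A -> False) -> MR i P.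
Proof. intros H k. exists Id. split; [constructor|]. intros A HA. exfalso. eauto. Qed.

Lemma reduce_bad_entry i P l : 1 <= l <= i -> ent P l <> 1%Z -> ent P l <> (-1)%Z -> MR i P.
Proof.
  intros Hl H1 H2. apply reduce_vacuous. intros A (HA & HF & Hi & _).
  assert (length A = r + t) by apply HA.
  rewrite <- (ent_prefix A P i l HF) in H1, H2 by lia.
  destruct (ent_sign r t A l HA); lia.
Qed.

Lemma reduce_base : MR 1 [1%Z].
Proof.
  intros k. exists (Scal (om k) Id). split; [repeat constructor|].
  intros A (HA & HF & Hi & Hne).
  assert (HL : length A = r + t) by apply HA.
  assert (E1 : ent A 1 = 1%Z) by (rewrite (ent_prefix A _ 1 1 HF) by lia; reflexivity).
  assert (E2 : ent A 2 = (-1)%Z).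
  { rewrite E1 in Hne. destruct (ent_sign r t A 2 HA); simpl in *; lia. }
  assert (E2' : ent A (1+1) = (-1)%Z) by exact E2.
  unfold moment. tr; [eapply E_rel; [auto | apply (r4 om A k E1 E2) | ty | ty]|].
  apply ev_sym. tr; [lin la_scr|]. apply ev_scal. lin la_idl.
Qed.

(* The last entry of the prefix can be chosen freely, thanks to the flip case. *)
Lemma reduce_any_last i P0 x : 1 <= i -> (x = 1 \/ x = -1)%Z -> MR i (P0 ++ [x]) ->
  forall y, MR i (P0 ++ [y]).
Proof.
  intros Hi Hx H y.
  destruct (Z.eq_dec y x) as [->|Hyx]; [exact H|].
  destruct (Z.eq_dec y (-x)) as [->|Hy].
  - apply reduce_flip_case; [lia|lia|]. rewrite Z.opp_involutive. exact H.
  - apply reduce_vacuous. intros A (HA & HF & Hi' & _).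
    assert (length A = r + t) by apply HA.
    assert (HP : length (P0 ++ [y]) = i) by (apply length_prefix in HF; lia).
    rewrite length_app in HP. simpl in HP.
    assert (ent A i = y).
    { rewrite (ent_prefix A _ i i HF), ent_app_r by lia. unfold ent.
      replace (i - length P0) with 1 by lia. reflexivity. }
    destruct (ent_sign r t A i HA); lia.
Qed.

Lemma reduce_all : forall i P, MR i P.
Proof.
  intros i. induction i as [i IHi] using lt_wf_ind. intros P.
  destruct i as [|i]; [apply reduce_vacuous; intros A (_ & _ & Hi & _); lia|].
  destruct (Nat.eq_dec (length P) (S i)) as [HlP|HlP].
  2: { apply reduce_vacuous. intros A (HA & HF & Hi & _). apply HlP.
       apply length_prefix in HF; auto. destruct HA as (HL & _). lia. }
  destruct (exists_last (l := P)) as (P' & y & ->); [intros ->; simpl in HlP; lia|].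
  rewrite length_app in HlP. simpl in HlP.
  destruct i as [|j].
  - destruct P'; [|simpl in HlP; lia]. apply (reduce_any_last 1 [] 1); auto. apply reduce_base.
  - destruct (exists_last (l := P')) as (P1 & z & ->); [intros ->; simpl in HlP; lia|].
    rewrite length_app in HlP. simpl in HlP.
    assert (Hz : ent ((P1 ++ [z]) ++ [y]) (S j) = z).
    { rewrite <- app_assoc, ent_app_r by lia. unfold ent. replace (S j - length P1) with 1 by lia.
      reflexivity. }
    destruct (Z.eq_dec z 1) as [Hz1|Hz1]; [|destruct (Z.eq_dec z (-1)) as [Hz2|Hz2]].
    3: { apply (reduce_bad_entry _ _ (S j)); lia. }
    all: apply (reduce_any_last _ _ z); [lia|lia|].
    all: rewrite <- app_assoc; replace (S (S j)) with (S j + 1) by lia.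
    all: apply reduce_equal_case; [lia|lia|apply IHi; lia].
Qed.
End Induction.

Fixpoint exps_add (a b : list nat) : list nat :=
  match a, b with [], _ => b | _, [] => a | x :: a', y :: b' => (x + y) :: exps_add a' b' end.

Definition unit_exps (l : nat) : list nat := repeat 0 (l - 1) ++ [1].
Definition cp_scale (c : CC) (p : cpoly) : cpoly := map (fun ce => (Cmul c (fst ce), snd ce)) p.
Definition cp_mul_term (ce : CC * list nat) (q : cpoly) : cpoly :=
  map (fun de => (Cmul (fst ce) (fst de), exps_add (snd ce) (snd de))) q.
Definition cp_mul (p q : cpoly) : cpoly := flat_map (fun ce => cp_mul_term ce q) p.

Fixpoint to_cpoly (f : tm) : cpoly :=
  match f with
  | Id => [(C1, [])]
  | Yg l => [(C1, unit_exps l)]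
  | Cmp f g => cp_mul (to_cpoly f) (to_cpoly g)
  | Add f g => to_cpoly f ++ to_cpoly g
  | Scal c f => cp_scale c (to_cpoly f)
  | _ => []
  end.

Lemma exps_add_length a b : length (exps_add a b) = Nat.max (length a) (length b).
Proof. revert b; induction a; intros [|y b]; simpl; auto. Qed.

Lemma in_vars_mono p m n : in_vars p m -> m <= n -> in_vars p n.
Proof.
  unfold in_vars. intros H Hm. eapply Forall_impl; [|exact H]. intros a Ha. simpl in *. lia.
Qed.

Lemma in_vars_mul_term c es q n : length es <= n -> in_vars q n ->
  in_vars (cp_mul_term (c, es) q) n.
Proof.
  intros He Hq. unfold cp_mul_term, in_vars in *. apply Forall_map.
  eapply Forall_impl; [|exact Hq]. intros [d e2] Hd. simpl in *. rewrite exps_add_length. lia.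
Qed.

Lemma in_vars_mul p q n : in_vars p n -> in_vars q n -> in_vars (cp_mul p q) n.
Proof.
  intros Hp Hq. unfold cp_mul. apply Forall_flat_map. eapply Forall_impl; [|exact Hp].
  intros [c es] H. apply in_vars_mul_term; auto.
Qed.

Lemma in_vars_scale c p n : in_vars p n -> in_vars (cp_scale c p) n.
Proof. intros H. unfold cp_scale, in_vars in *. apply Forall_map. exact H. Qed.

Lemma to_cpoly_vars m Q : poly_in m Q -> in_vars (to_cpoly Q) m.
Proof.
  induction 1; cbn [to_cpoly].
  - repeat constructor. simpl. lia.
  - repeat constructor. simpl. unfold unit_exps. rewrite length_app, repeat_length. simpl. lia.
  - apply in_vars_mul; auto.
  - apply Forall_app; auto.
  - apply in_vars_scale; auto.
Qed.

Lemma Cmul_comm a b : Cmul a b = Cmul b a.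
Proof. destruct a, b. unfold Cmul; simpl. f_equal; ring. Qed.

Lemma Cmul_0_r c : Cmul c C0 = C0.
Proof. unfold Cmul, C0. destruct c; simpl. f_equal; ring. Qed.

Lemma evalp_cons a p : evalp (a :: p) = Add (Scal (fst a) (mono (snd a))) (evalp p).
Proof. reflexivity. Qed.

Section Evaluation.
Variables (r t : nat) (om : nat -> CC).
Notation E := (eqv r t om).
Variable X : list Z.
Hypothesis HX : in_Seq r t X.

Lemma tgt_mono_aux es : forall j, 1 <= j -> j + length es <= length X + 1 ->
  tgt X (mono_aux j es) = Some X.
Proof.
  induction es; intros j H1 H2; cbn [mono_aux tgt]; auto. simpl in H2. rewrite IHes by lia. ty.
Qed.

Lemma mono_aux_poly es : forall j, 1 <= j -> j + length es <= length X + 1 ->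
  poly_in (length X) (mono_aux j es).
Proof.
  induction es; intros j H1 H2; cbn [mono_aux]; [constructor|]. simpl in H2.
  constructor; [apply poly_in_pw; lia | apply IHes; lia].
Qed.

Lemma tgt_mono es : length es <= length X -> tgt X (mono es) = Some X.
Proof. intros. apply tgt_mono_aux; lia. Qed.

Lemma tgt_evalp p : in_vars p (length X) -> tgt X (evalp p) = Some X.
Proof.
  induction p as [|a p IH]; intros H; [ty|]. rewrite evalp_cons.
  apply Forall_cons_iff in H as [Ha Hp']. assert (T1 := tgt_mono _ Ha). assert (T2 := IH Hp'). ty.
Qed.

Lemma pw_add f n m : tgt X f = Some X -> E X (Cmp (pw f n) (pw f m)) (pw f (n + m)).
Proof.
  intros Hf. induction n; cbn [pw Nat.add]; [lin la_idl|].
  tr; [apply ev_sym; lin la_assoc|]. eapply E_cmpR; [exact IHn|ty|ty].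
Qed.

Lemma mono_mul e1 : forall e2 j, 1 <= j -> j + length e1 <= length X + 1 ->
  j + length e2 <= length X + 1 ->
  E X (Cmp (mono_aux j e1) (mono_aux j e2)) (mono_aux j (exps_add e1 e2)).
Proof.
  induction e1 as [|n e1 IH]; intros e2 j H1 H2 H3.
  - cbn [mono_aux exps_add]. assert (tgt X (mono_aux j e2) = Some X) by (apply tgt_mono_aux; lia).
    lin la_idl.
  - destruct e2 as [|m e2].
    + cbn [mono_aux exps_add]. simpl in H2.
      assert (tgt X (mono_aux (j+1) e1) = Some X) by (apply tgt_mono_aux; lia). lin la_idr.
    + simpl in H2, H3. cbn [mono_aux exps_add].
      assert (T1 : tgt X (mono_aux (j+1) e1) = Some X) by (apply tgt_mono_aux; lia).
      assert (T2 : tgt X (mono_aux (j+1) e2) = Some X) by (apply tgt_mono_aux; lia).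
      assert (T3 : tgt X (mono_aux (j+1) (exps_add e1 e2)) = Some X)
        by (apply tgt_mono_aux; [lia | rewrite exps_add_length; lia]).
      assert (Hc : E X (Cmp (mono_aux (j+1) e1) (pw (Yg j) m))
                     (Cmp (pw (Yg j) m) (mono_aux (j+1) e1))).
      { apply comm_poly_poly with (m := length X) (m' := length X); auto;
          [apply mono_aux_poly | apply poly_in_pw]; lia. }
      assert (Hp : E X (Cmp (pw (Yg j) n) (pw (Yg j) m)) (pw (Yg j) (n + m))) by (apply pw_add; ty).
      assert (HI : E X (Cmp (mono_aux (j+1) e1) (mono_aux (j+1) e2))
                     (mono_aux (j+1) (exps_add e1 e2))) by (apply IH; lia).
      words.
      rw_at 1 [mono_aux (j+1) e1; pw (Yg j) m] [pw (Yg j) m; mono_aux (j+1) e1] Hc.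
      rw_at 0 [pw (Yg j) n; pw (Yg j) m] [pw (Yg j) (n+m)] Hp.
      rw_at 1 [mono_aux (j+1) e1; mono_aux (j+1) e2] [mono_aux (j+1) (exps_add e1 e2)] HI.
      words_done.
Qed.

Lemma evalp_app p q : in_vars p (length X) -> in_vars q (length X) ->
  E X (evalp (p ++ q)) (Add (evalp p) (evalp q)).
Proof.
  intros Hp Hq. assert (Tq := tgt_evalp q Hq). induction p as [|a p IH].
  - cbn [app]. change (evalp []) with (Scal C0 Id). apply ev_sym. tr; [lin la_addC|]. lin la_add0.
  - apply Forall_cons_iff in Hp as [H1 H2].
    assert (Tp := tgt_evalp p H2). assert (Tm := tgt_mono (snd a) H1).
    assert (Tpq : tgt X (evalp (p ++ q)) = Some X) by (apply tgt_evalp; apply Forall_app; auto).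
    rewrite <- app_comm_cons, !evalp_cons.
    tr; [apply ev_add; [apply E_refl with (B := X); auto; ty | apply IH; auto | ty]|].
    lin la_addA.
Qed.

Lemma evalp_scale c p : in_vars p (length X) -> E X (evalp (cp_scale c p)) (Scal c (evalp p)).
Proof.
  intros Hp. induction p as [|a p IH].
  - unfold cp_scale; cbn [map]. change (evalp []) with (Scal C0 Id).
    tr; [|apply ev_sym; lin la_scA].
    rewrite Cmul_0_r. apply E_refl with (B := X); auto.
  - apply Forall_cons_iff in Hp as [H1 H2].
    assert (Tp := tgt_evalp p H2). assert (Tm := tgt_mono (snd a) H1).
    assert (Tsp : tgt X (evalp (cp_scale c p)) = Some X) by (apply tgt_evalp, in_vars_scale; auto).
    unfold cp_scale at 1. cbn [map]. rewrite !evalp_cons. cbn [fst snd]. fold (cp_scale c p).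
    tr; [apply ev_add; [apply ev_sym; lin la_scA | apply IH; auto | ty]|].
    apply ev_sym. lin la_scDr.
Qed.

Lemma evalp_mul_term c es q : length es <= length X -> in_vars q (length X) ->
  E X (Cmp (Scal c (mono es)) (evalp q)) (evalp (cp_mul_term (c, es) q)).
Proof.
  intros He Hq. assert (Tm := tgt_mono es He). induction q as [|a q IH].
  - unfold cp_mul_term; cbn [map]. change (evalp []) with (Scal C0 Id).
    tr; [lin la_scl|]. apply scal0_any with (B := X); auto; ty.
  - apply Forall_cons_iff in Hq as [H1 H2].
    assert (Tq := tgt_evalp q H2). assert (Tm2 := tgt_mono (snd a) H1).
    assert (Tv : tgt X (mono (exps_add es (snd a))) = Some X)
      by (apply tgt_mono; rewrite exps_add_length; lia).
    assert (Tmq : tgt X (evalp (cp_mul_term (c, es) q)) = Some X)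
      by (apply tgt_evalp, in_vars_mul_term; auto).
    unfold cp_mul_term at 1. cbn [map]. rewrite !evalp_cons. cbn [fst snd].
    fold (cp_mul_term (c, es) q).
    tr; [lin la_distl|]. apply ev_add; [| apply IH; auto | ty].
    tr; [lin la_scl|]. tr; [apply ev_scal; lin la_scr|]. tr; [lin la_scA|].
    rewrite Cmul_comm. apply ev_scal. apply mono_mul; simpl; lia.
Qed.

Lemma evalp_mul p q : in_vars p (length X) -> in_vars q (length X) ->
  E X (Cmp (evalp p) (evalp q)) (evalp (cp_mul p q)).
Proof.
  intros Hp Hq. assert (Tq := tgt_evalp q Hq). induction p as [|[c es] p IH].
  - unfold cp_mul; cbn [flat_map]. change (evalp []) with (Scal C0 Id).
    tr; [lin la_scr|]. apply scal0_any with (B := X); auto; ty.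
  - apply Forall_cons_iff in Hp as [H1 H2]. simpl in H1.
    assert (Tp := tgt_evalp p H2). assert (Tm := tgt_mono es H1).
    assert (V1 := in_vars_mul_term c es q _ H1 Hq). assert (V2 := in_vars_mul p q _ H2 Hq).
    assert (T1 := tgt_evalp _ V1). assert (T2 := tgt_evalp _ V2).
    change (cp_mul ((c, es) :: p) q) with (cp_mul_term (c, es) q ++ cp_mul p q).
    rewrite evalp_cons. cbn [fst snd].
    tr; [lin la_distr|]. tr; [apply ev_add; [apply evalp_mul_term; auto | apply IH; auto | ty]|].
    apply ev_sym. apply evalp_app; auto.
Qed.

Lemma mono_unit d : forall j, 1 <= j -> j + d <= length X ->
  E X (mono_aux j (repeat 0 d ++ [1])) (Yg (j + d)).
Proof.
  induction d; intros j H1 H2; cbn [repeat app mono_aux pw].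
  - replace (j + 0) with j by lia. tr; [lin la_idr|]. lin la_idr.
  - replace (j + S d) with (j + 1 + d) by lia.
    assert (T : tgt X (mono_aux (j+1) (repeat 0 d ++ [1])) = Some X).
    { apply tgt_mono_aux; [lia|]. rewrite length_app, repeat_length. simpl. lia. }
    tr; [lin la_idl|]. apply IHd; lia.
Qed.

Lemma to_cpoly_correct m Q : poly_in m Q -> m <= length X -> E X (evalp (to_cpoly Q)) Q.
Proof.
  intros HQ Hm. assert (HV' : in_vars (to_cpoly Q) (length X))
    by (eapply in_vars_mono; [apply (to_cpoly_vars m Q HQ)|lia]).
  induction HQ; cbn [to_cpoly] in *.
  - rewrite evalp_cons. cbn [evalp fold_right fst snd mono mono_aux].
    tr; [lin la_add0|]. lin la_sc1.
  - rewrite evalp_cons. cbn [evalp fold_right fst snd].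
    assert (Tm : tgt X (mono (unit_exps l)) = Some X).
    { apply tgt_mono. unfold unit_exps. rewrite length_app, repeat_length. simpl. lia. }
    tr; [lin la_add0|]. tr; [lin la_sc1|]. unfold mono, unit_exps.
    replace (Yg l) with (Yg (1 + (l - 1))) by (f_equal; lia). apply mono_unit; lia.
  - assert (V1 : in_vars (to_cpoly f) (length X))
      by (eapply in_vars_mono; [apply (to_cpoly_vars m f HQ1)|lia]).
    assert (V2 : in_vars (to_cpoly g) (length X))
      by (eapply in_vars_mono; [apply (to_cpoly_vars m g HQ2)|lia]).
    assert (T1 := tgt_evalp _ V1). assert (T2 := tgt_evalp _ V2).
    tr; [apply ev_sym; apply evalp_mul; auto|].
    tr; [eapply E_cmpR; [apply IHHQ2; auto | ty | ty]|].
    eapply E_cmpL; [apply IHHQ1; auto | auto | ty].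
  - apply Forall_app in HV' as [V1 V2].
    assert (T1 := tgt_evalp _ V1). assert (T2 := tgt_evalp _ V2).
    tr; [apply evalp_app; auto|]. apply ev_add; auto. ty.
  - assert (V1 : in_vars (to_cpoly f) (length X))
      by (eapply in_vars_mono; [apply (to_cpoly_vars m f HQ)|lia]).
    tr; [apply evalp_scale; auto|]. apply ev_scal. auto.
Qed.
End Evaluation.

(* W(P, k) is the polynomial of a reduction witness for the k-th moment at prefix P;
   it depends on A only through P = (a_1, ..., a_i). *)
Theorem mainTheorem5 (r t : nat) (om : nat -> CC) :
  exists W : list Z -> nat -> cpoly,
    forall (A : list Z) (i : nat),
      in_Seq r t A -> 1 <= i <= r + t - 1 -> ent A i <> ent A (i + 1) ->
      forall k : nat,
        in_vars (W (firstn i A) k) (i - 1) /\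
        eqv r t om A (Cmp (Eg i) (Cmp (pw (Yg i) k) (Eg i)))
                     (Cmp (evalp (W (firstn i A) k)) (Eg i)).
Proof.
  exists (fun P k => to_cpoly (proj1_sig
    (constructive_indefinite_description _ (reduce_all r t om (length P) P k)))).
  intros A i HA Hi Hne k.
  assert (HLA : length A = r + t) by apply HA.
  assert (HL : length (firstn i A) = i) by (rewrite length_firstn; lia).
  destruct (constructive_indefinite_description _ (reduce_all r t om _ (firstn i A) k))
    as [Q HQE]. cbn [proj1_sig]. rewrite HL in HQE. destruct HQE as (HQ & HE).
  split; [apply to_cpoly_vars; auto|].
  assert (HQA : eqv r t om A (moment i k) (Cmp Q (Eg i)))
    by (apply HE; split; [exact HA | split; [reflexivity | split; assumption]]).
  tr; [exact HQA|]. eapply E_cmpL; [| auto | ty].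
  apply ev_sym. apply (to_cpoly_correct r t om A HA (i - 1)); auto. lia.
Qed.
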